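(* Let $\mathcal{A}=(A,B,C,S_B,S_C,\Delta_B,\Delta_C)$ be a regular multiplier Hopf algebroid with antipode $S$ and canonical maps $T_\lambda,T_\rho,{}_\lambda T,{}_\rho T$, and let $\Sigma$ denote the flip $a\otimes b\mapsto b\otimes a$ between the relevant balanced tensor products. Then: (i) the three maps $(S\otimes\iota)\circ\Sigma\circ{}_\lambda T$, $\Sigma\circ T_\rho^{-1}\circ T_\lambda\circ\Sigma$ and ${}_\rho T^{-1}\circ(S\otimes\iota)\circ\Sigma$ from $A_C\otimes{}_CA$ to ${}_BA\otimes A_B$ coincide; (ii) the three maps $(\iota\otimes S)\circ\Sigma\circ T_\rho$, $\Sigma\circ{}_\lambda T^{-1}\circ{}_\rho T\circ\Sigma$ and $T_\lambda^{-1}\circ(\iota\otimes S)\circ\Sigma$ from $A_B\otimes{}_BA$ to ${}_CA\otimes A_C$ coincide.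
   Context: All algebras are associative complex algebras, not necessarily unital; $M(A)$ is the two-sided multiplier algebra of a non-degenerate idempotent algebra $A$. Multiplier bialgebroid: a tuple $(A,B,C,S_B,S_C,\Delta_B,\Delta_C)$ with $A$ non-degenerate and idempotent, subalgebras $B,C\subseteq M(A)$, anti-isomorphisms $S_B\colon B\to C$, $S_C\colon C\to B$. Quotients of $A\otimes A$: ${}_BA\otimes A^B$ by the span of $xa\otimes b-a\otimes S_B(x)b$; ${}^CA\otimes A_C$ by $aS_C(y)\otimes b-a\otimes by$; $A_B\otimes{}_BA$ by $ax\otimes b-a\otimes xb$; $A_C\otimes{}_CA$ by $ay\otimes b-a\otimes yb$; ${}_CA\otimes A_C$ by $ya\otimes b-a\otimes by$; ${}_BA\otimes A_B$ by $xa\otimes b-a\otimes bx$ ($x\in B,y\in C$). Requirements: $BA=A=S_B(B)A$, $AC=A=AS_C(C)$; ${}_BA\otimes A^B$ non-degenerate as a right module over $A\otimes1$ and $1\otimes A$, ${}^CA\otimes A_C$ non-degenerate as a left module over $A\otimes1$ and $1\otimes A$; $\Delta_B$ a homomorphism into the algebra of endomorphisms $T$ of ${}_BA\otimes A^B$ for which $T(a\otimes1),T(1\otimes b)\in{}_BA\otimes A^B$ exist with $T(a\otimes b)=T(a\otimes1)(1\otimes b)=T(1\otimes b)(a\otimes1)$; $\Delta_C$ a homomorphism into the algebra of right-acting maps $w\mapsto wT$ on ${}^CA\otimes A_C$ for which $(a\otimes1)T,(1\otimes b)T$ exist with $(a\otimes b)T=(1\otimes b)((a\otimes1)T)=(a\otimes1)((1\otimes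 b)T)$; $\Delta_B(xyax'y')=(y\otimes x)\Delta_B(a)(y'\otimes x')$, $\Delta_C(xyax'y')=(y\otimes x)\Delta_C(a)(y'\otimes x')$; coassociativities $(\Delta_B\otimes\iota)(\Delta_B(b)(1\otimes c))(a\otimes1\otimes1)=(\iota\otimes\Delta_B)(\Delta_B(b)(a\otimes1))(1\otimes1\otimes c)$, $(a\otimes1\otimes1)((\Delta_C\otimes\iota)((1\otimes c)\Delta_C(b)))=(1\otimes1\otimes c)((\iota\otimes\Delta_C)((a\otimes1)\Delta_C(b)))$, and mixed $((\Delta_B\otimes\iota)((1\otimes c)\Delta_C(b)))(a\otimes1\otimes1)=(1\otimes1\otimes c)((\iota\otimes\Delta_C)(\Delta_B(b)(a\otimes1)))$, $(a\otimes1\otimes1)((\Delta_C\otimes\iota)(\Delta_B(b)(1\otimes c)))=((\iota\otimes\Delta_B)((a\otimes1)\Delta_C(b)))(1\otimes1\otimes c)$. Canonical maps: $T_\lambda\colon{}_CA\otimes A_C\to{}_BA\otimes A^B$, $a\otimes b\mapsto\Delta_B(b)(a\otimes1)$; $T_\rho\colon A_B\otimes{}_BA\to{}_BA\otimes A^B$, $a\otimes b\mapsto\Delta_B(a)(1\otimes b)$; ${}_\lambda T\colon A_C\otimes{}_CA\to{}^CA\otimes A_C$, $a\otimes b\mapsto(a\otimes1)\Delta_C(b)$; ${}_\rho T\colon{}_BA\otimes A_B\to{}^CA\otimes A_C$, $a\otimes b\mapsto(1\otimes b)\Delta_C(a)$. Counits: left counit $\varepsilon_B\colon A\to B$ with $\varepsilon_B(xS_B(x')a)=x\varepsilon_B(a)x'$,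 $\sum S_B(\varepsilon_B(c_i))d_i=ab$ when $T_\rho(a\otimes b)=\sum c_i\otimes d_i$, and $\sum\varepsilon_B(d_i)c_i=ba$ when $T_\lambda(a\otimes b)=\sum c_i\otimes d_i$. Right counit $\varepsilon_C\colon A\to C$ with $\varepsilon_C(aS_C(y')y)=y'\varepsilon_C(a)y$, $\sum d_i\varepsilon_C(c_i)=ba$ when ${}_\rho T(a\otimes b)=\sum c_i\otimes d_i$, and $\sum c_iS_C(\varepsilon_C(d_i))=ab$ when ${}_\lambda T(a\otimes b)=\sum c_i\otimes d_i$. Regular multiplier Hopf algebroid: multiplier bialgebroid with all four canonical maps bijective and $S_B(I_B)A=I^BA=A=AS_C(I_C)=A\,{}^CI$, where $I_B,I^B\subseteq B$ are spanned by values of maps $\omega\colon A\to B$ with $\omega(xa)=x\omega(a)$, resp. $\omega(S_B(x)a)=\omega(a)x$, and $I_C,{}^CI\subseteq C$ by values of $\omega\colon A\to C$ with $\omega(ay)=\omega(a)y$, resp. $\omega(aS_C(y))=y\omega(a)$. Its antipode is the (unique) algebra anti-automorphism $S$ of $A$ with $S(xyax'y')=S_C(y')S_B(x')S(a)S_C(y)S_B(x)$ such that for some left counit $\varepsilon_B$ and right counit $\varepsilon_C$: $m(S\otimes\iota)T_\rho(a\otimes b)=S_C(\varepsilon_C(a))b$ and $m(\iota\otimes S)\,{}_\lambda T(a\otimes b)=aS_B(\varepsilon_B(b))$. *)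

(* Conventions:
   - A is a K-vector space with a bilinear associative (possibly non-unital)
     product [mul].
   - A multiplier is a pair (l, r) of maps A -> A (left action x.a := l a,
     right action a.x := r a); M(A) consists of the pairs with
     l(ab) = l(a)b, r(ab) = a r(b), a l(b) = r(a) b.  Multipliers are compared
     with Leibniz equality (= extensional equality, funext is available).
   - Balanced tensor products A (x) A / N are represented as setoids: an
     element is a finite formal sum of simple tensors, i.e. a [seq (A * A)],
     and two formal sums represent the same element iff they are related by
     [teq], the congruence generated by bilinearity and the balancing
     relations.  Similarly for triple tensor products with [seq (A*A*A)].
   - Linear maps between such quotients are maps on representatives
     respecting the equivalences. *)
From mathcomp Require Import all_boot all_algebra.
From mathcomp Require Import reals complex.
From Stdlib Require List.
Set Implicit Arguments.
Unset Strict Implicit.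
Unset Printing Implicit Defensive.
Import GRing.Theory.
Local Open Scope ring_scope.

Section FormalSums.
Variable X : Type.
Variable gen : seq X -> seq X -> Prop.

Inductive teq : seq X -> seq X -> Prop :=
| teq_gen s t : gen s t -> teq s t
| teq_refl s : teq s s
| teq_sym s t : teq s t -> teq t s
| teq_trans s t u : teq s t -> teq t u -> teq s u
| teq_cat s s' t t' : teq s t -> teq s' t' -> teq (s ++ s') (t ++ t')
| teq_swap s t : teq (s ++ t) (t ++ s).
End FormalSums.

Section MHA.
Variable R : realType.
Local Notation K := (R[i]).
Variable A : lmodType K.
Variable mul : A -> A -> A.

Definition is_algebra : Prop :=
  [/\ forall a b c, mul (mul a b) c = mul a (mul b c),
      forall a b c, mul (a + b) c = mul a c + mul b c,
      forall a b c, mul a (b + c) = mul a b + mul a c,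
      forall (k : K) a b, mul (k *: a) b = k *: mul a b
    & forall (k : K) a b, mul a (k *: b) = k *: mul a b].

Definition nondegenerate_alg : Prop :=
  (forall a, (forall b, mul a b = 0) -> a = 0) /\
  (forall a, (forall b, mul b a = 0) -> a = 0).

Definition idempotent_alg : Prop :=
  forall a, exists s : seq (A * A), a = \sum_(p <- s) mul p.1 p.2.

Definition mult := ((A -> A) * (A -> A))%type.
Definition mlact (x : mult) (a : A) : A := x.1 a.
Definition mract (a : A) (x : mult) : A := x.2 a.

Definition is_mult (x : mult) : Prop :=
  [/\ forall a b, x.1 (mul a b) = mul (x.1 a) b,
      forall a b, x.2 (mul a b) = mul a (x.2 b)
    & forall a b, mul a (x.1 b) = mul (x.2 a) b].

Definition mmul (x y : mult) : mult := (fun a => x.1 (y.1 a), fun a => y.2 (x.2 a)).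
Definition madd (x y : mult) : mult := (fun a => x.1 a + y.1 a, fun a => x.2 a + y.2 a).
Definition mscale (k : K) (x : mult) : mult := (fun a => k *: x.1 a, fun a => k *: x.2 a).
Definition mzero : mult := (fun _ => 0, fun _ => 0).

Definition subalg_M (P : mult -> Prop) : Prop :=
  [/\ forall x, P x -> is_mult x,
      P mzero,
      forall x y, P x -> P y -> P (madd x y),
      forall k x, P x -> P (mscale k x)
    & forall x y, P x -> P y -> P (mmul x y)].

Definition anti_iso (P Q : mult -> Prop) (f : mult -> mult) : Prop :=
  [/\ forall x, P x -> Q (f x),
      forall x y, P x -> P y -> f (madd x y) = madd (f x) (f y),
      forall k x, P x -> f (mscale k x) = mscale k (f x),
      forall x y, P x -> P y -> f (mmul x y) = mmul (f y) (f x)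
    & (forall x y, P x -> P y -> f x = f y -> x = y) /\
      (forall y, Q y -> exists2 x, P x & f x = y)].

Definition lspan_full (P : mult -> Prop) : Prop :=
  forall a, exists2 s : seq (mult * A), (forall p, List.In p s -> P p.1)
    & a = \sum_(p <- s) mlact p.1 p.2.
Definition rspan_full (P : mult -> Prop) : Prop :=
  forall a, exists2 s : seq (mult * A), (forall p, List.In p s -> P p.1)
    & a = \sum_(p <- s) mract p.2 p.1.

Definition T2 := seq (A * A).
Definition T3 := seq (A * A * A).

Inductive gen2 (bal : A -> A -> A -> A -> Prop) : T2 -> T2 -> Prop :=
| g2_addl a a' b : gen2 bal [:: (a + a', b)] [:: (a, b); (a', b)]
| g2_addr a b b' : gen2 bal [:: (a, b + b')] [:: (a, b); (a, b')]
| g2_scal (k : K) a b : gen2 bal [:: (k *: a, b)] [:: (a, k *: b)]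
| g2_zero b : gen2 bal [:: (0, b)] [::]
| g2_bal a b a' b' : bal a b a' b' -> gen2 bal [:: (a, b)] [:: (a', b')].

Inductive gen3 (bal : A -> A -> A -> A -> A -> A -> Prop) : T3 -> T3 -> Prop :=
| g3_add1 a a' b c : gen3 bal [:: (a + a', b, c)] [:: (a, b, c); (a', b, c)]
| g3_add2 a b b' c : gen3 bal [:: (a, b + b', c)] [:: (a, b, c); (a, b', c)]
| g3_add3 a b c c' : gen3 bal [:: (a, b, c + c')] [:: (a, b, c); (a, b, c')]
| g3_scal12 (k : K) a b c : gen3 bal [:: (k *: a, b, c)] [:: (a, k *: b, c)]
| g3_scal23 (k : K) a b c : gen3 bal [:: (a, k *: b, c)] [:: (a, b, k *: c)]
| g3_zero b c : gen3 bal [:: (0, b, c)] [::]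
| g3_bal a b c a' b' c' : bal a b c a' b' c' ->
    gen3 bal [:: (a, b, c)] [:: (a', b', c')].

Definition teq2 bal := teq (gen2 bal).
Definition teq3 bal := teq (gen3 bal).

Definition tscale (k : K) (w : T2) : T2 := [seq (k *: p.1, p.2) | p <- w].
Definition flip (w : T2) : T2 := [seq (p.2, p.1) | p <- w].
Definition map1 (f : A -> A) (w : T2) : T2 := [seq (f p.1, p.2) | p <- w].
Definition map2 (f : A -> A) (w : T2) : T2 := [seq (p.1, f p.2) | p <- w].
Definition rmul1 (w : T2) (a : A) : T2 := [seq (mul p.1 a, p.2) | p <- w].
Definition rmul2 (w : T2) (b : A) : T2 := [seq (p.1, mul p.2 b) | p <- w].
Definition lmul1 (a : A) (w : T2) : T2 := [seq (mul a p.1, p.2) | p <- w].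
Definition lmul2 (b : A) (w : T2) : T2 := [seq (p.1, mul b p.2) | p <- w].
Definition lmulM (y x : mult) (w : T2) : T2 := [seq (mlact y p.1, mlact x p.2) | p <- w].
Definition rmulM (w : T2) (y x : mult) : T2 := [seq (mract p.1 y, mract p.2 x) | p <- w].
Definition tmul (w : T2) : A := \sum_(p <- w) mul p.1 p.2.

Section WithBaseAlgebras.
Variables (B C : mult -> Prop) (SB SC : mult -> mult).

(* _B A (x) A^B :  x a (x) b ~ a (x) S_B(x) b *)
Inductive bal_QB : A -> A -> A -> A -> Prop :=
  bQB x a b : B x -> bal_QB (mlact x a) b a (mlact (SB x) b).
(* ^C A (x) A_C :  a S_C(y) (x) b ~ a (x) b y *)
Inductive bal_QC : A -> A -> A -> A -> Prop :=
  bQC y a b : C y -> bal_QC (mract a (SC y)) b a (mract b y).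
(* A_B (x) _B A :  a x (x) b ~ a (x) x b *)
Inductive bal_PB : A -> A -> A -> A -> Prop :=
  bPB x a b : B x -> bal_PB (mract a x) b a (mlact x b).
(* A_C (x) _C A :  a y (x) b ~ a (x) y b *)
Inductive bal_PC : A -> A -> A -> A -> Prop :=
  bPC y a b : C y -> bal_PC (mract a y) b a (mlact y b).
(* _C A (x) A_C :  y a (x) b ~ a (x) b y *)
Inductive bal_LC : A -> A -> A -> A -> Prop :=
  bLC y a b : C y -> bal_LC (mlact y a) b a (mract b y).
(* _B A (x) A_B :  x a (x) b ~ a (x) b x *)
Inductive bal_LB : A -> A -> A -> A -> Prop :=
  bLB x a b : B x -> bal_LB (mlact x a) b a (mract b x).

Definition eqQB := teq2 bal_QB.
Definition eqQC := teq2 bal_QC.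
Definition eqPB := teq2 bal_PB.
Definition eqPC := teq2 bal_PC.
Definition eqLC := teq2 bal_LC.
Definition eqLB := teq2 bal_LB.

(* _B A (x) ^B_B A^ (x) A^B *)
Inductive bal_BB3 : A -> A -> A -> A -> A -> A -> Prop :=
| bBB3_1 x a b c : B x -> bal_BB3 (mlact x a) b c a (mlact (SB x) b) c
| bBB3_2 x a b c : B x -> bal_BB3 a (mlact x b) c a b (mlact (SB x) c).
(* ^C A (x) ^C A_C (x) A_C *)
Inductive bal_CC3 : A -> A -> A -> A -> A -> A -> Prop :=
| bCC3_1 y a b c : C y -> bal_CC3 (mract a (SC y)) b c a (mract b y) c
| bCC3_2 y a b c : C y -> bal_CC3 a (mract b (SC y)) c a b (mract c y).
(* _B A (x) ^B A^C (x) A_C  (first mixed law) *)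
Inductive bal_BC3 : A -> A -> A -> A -> A -> A -> Prop :=
| bBC3_1 x a b c : B x -> bal_BC3 (mlact x a) b c a (mlact (SB x) b) c
| bBC3_2 y a b c : C y -> bal_BC3 a (mract b (SC y)) c a b (mract c y).
(* ^C A (x) _B A_C (x) A^B  (second mixed law) *)
Inductive bal_CB3 : A -> A -> A -> A -> A -> A -> Prop :=
| bCB3_1 y a b c : C y -> bal_CB3 (mract a (SC y)) b c a (mract b y) c
| bCB3_2 x a b c : B x -> bal_CB3 a (mlact x b) c a b (mlact (SB x) c).

Definition eqBB3 := teq3 bal_BB3.
Definition eqCC3 := teq3 bal_CC3.
Definition eqBC3 := teq3 bal_BC3.
Definition eqCB3 := teq3 bal_CB3.

Definition ext_l (F : A -> T2) (w : T2) : T3 :=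
  flatten [seq [seq (u.1, u.2, p.2) | u <- F p.1] | p <- w].
Definition ext_r (F : A -> T2) (w : T2) : T3 :=
  flatten [seq [seq (p.1, u.1, u.2) | u <- F p.2] | p <- w].

Definition respects (e1 e2 : T2 -> T2 -> Prop) (f : T2 -> T2) : Prop :=
  forall v w, e1 v w -> e2 (f v) (f w).

Definition tbijective (e1 e2 : T2 -> T2 -> Prop) (f : T2 -> T2) : Prop :=
  [/\ respects e1 e2 f,
      forall v w, e2 (f v) (f w) -> e1 v w
    & forall w, exists v, e2 (f v) w].

Definition tinverse (e1 e2 : T2 -> T2 -> Prop) (f g : T2 -> T2) : Prop :=
  [/\ respects e2 e1 g,
      forall w, e2 (f (g w)) w
    & forall v, e1 (g (f v)) v].

Definition tlinear_endo (e : T2 -> T2 -> Prop) (T : T2 -> T2) : Prop :=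
  [/\ respects e e T,
      forall v w, e (T (v ++ w)) (T v ++ T w)
    & forall k w, e (T (tscale k w)) (tscale k (T w))].

(* DB c   represents  w |-> Delta_B(c) w  on _B A (x) A^B, with
          LB c a = Delta_B(c)(a (x) 1),   RB c b = Delta_B(c)(1 (x) b);
   DC c   represents  w |-> w Delta_C(c)  on ^C A (x) A_C, with
          LC c a = (a (x) 1) Delta_C(c),  RC c b = (1 (x) b) Delta_C(c). *)
Variables (DB DC : A -> T2 -> T2) (LB RB LC RC : A -> A -> T2).

Definition is_mult_bialgebroid : Prop :=
  [/\ [/\ [/\ is_algebra, nondegenerate_alg & idempotent_alg],
      [/\ subalg_M B, subalg_M C, anti_iso B C SB & anti_iso C B SC],
      [/\ lspan_full B, lspan_full (fun z => exists2 x, B x & z = SB x),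
          rspan_full C & rspan_full (fun z => exists2 y, C y & z = SC y)]
    & [/\ forall w, (forall a, eqQB (rmul1 w a) [::]) -> eqQB w [::],
          forall w, (forall b, eqQB (rmul2 w b) [::]) -> eqQB w [::],
          forall w, (forall a, eqQC (lmul1 a w) [::]) -> eqQC w [::]
        & forall w, (forall b, eqQC (lmul2 b w) [::]) -> eqQC w [::]]],
      [/\ [/\ forall c, tlinear_endo eqQB (DB c),
          forall c a b, eqQB (DB c [:: (a, b)]) (rmul2 (LB c a) b) /\
                        eqQB (DB c [:: (a, b)]) (rmul1 (RB c b) a),
          forall c d w, eqQB (DB (c + d) w) (DB c w ++ DB d w),
          forall k c w, eqQB (DB (k *: c) w) (tscale k (DB c w))
        & forall c d w, eqQB (DB (mul c d) w) (DB c (DB d w))]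
    & [/\ forall c, tlinear_endo eqQC (DC c),
          forall c a b, eqQC (DC c [:: (a, b)]) (lmul2 b (LC c a)) /\
                        eqQC (DC c [:: (a, b)]) (lmul1 a (RC c b)),
          forall c d w, eqQC (DC (c + d) w) (DC c w ++ DC d w),
          forall k c w, eqQC (DC (k *: c) w) (tscale k (DC c w))
        & forall c d w, eqQC (DC (mul c d) w) (DC d (DC c w))]],
      (forall x y a x' y' w, B x -> C y -> B x' -> C y' ->
         eqQB (DB (mract (mract (mlact x (mlact y a)) x') y') w)
              (lmulM y x (DB a (lmulM y' x' w))) /\
         eqQC (DC (mract (mract (mlact x (mlact y a)) x') y') w)
              (rmulM (DC a (rmulM w y x)) y' x'))
    &
      [/\ forall a b c, eqBB3 (ext_l (fun p => LB p a) (RB b c))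
                              (ext_r (fun q => RB q c) (LB b a)),
          forall a b c, eqCC3 (ext_l (fun p => LC p a) (RC b c))
                              (ext_r (fun q => RC q c) (LC b a)),
          forall a b c, eqBC3 (ext_l (fun p => LB p a) (RC b c))
                              (ext_r (fun q => RC q c) (LB b a))
        & forall a b c, eqCB3 (ext_l (fun p => LC p a) (RB b c))
                              (ext_r (fun q => RB q c) (LC b a))]].

(* T_lambda : _C A (x) A_C -> _B A (x) A^B,  a (x) b |-> Delta_B(b)(a (x) 1) *)
Definition T_lambda (w : T2) : T2 := flatten [seq LB p.2 p.1 | p <- w].
(* T_rho : A_B (x) _B A -> _B A (x) A^B,  a (x) b |-> Delta_B(a)(1 (x) b) *)
Definition T_rho (w : T2) : T2 := flatten [seq RB p.1 p.2 | p <- w].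
(* lambda_T : A_C (x) _C A -> ^C A (x) A_C,  a (x) b |-> (a (x) 1) Delta_C(b) *)
Definition lambda_T (w : T2) : T2 := flatten [seq LC p.2 p.1 | p <- w].
(* rho_T : _B A (x) A_B -> ^C A (x) A_C,  a (x) b |-> (1 (x) b) Delta_C(a) *)
Definition rho_T (w : T2) : T2 := flatten [seq RC p.1 p.2 | p <- w].

Definition linear_M (f : A -> mult) : Prop :=
  (forall a b, f (a + b) = madd (f a) (f b)) /\
  (forall (k : K) a, f (k *: a) = mscale k (f a)).

Definition left_counit (epsB : A -> mult) : Prop :=
  [/\ linear_M epsB, forall a, B (epsB a),
      forall x x' a, B x -> B x' ->
        epsB (mlact x (mlact (SB x') a)) = mmul x (mmul (epsB a) x'),
      forall a b w, eqQB w (T_rho [:: (a, b)]) ->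
        \sum_(p <- w) mlact (SB (epsB p.1)) p.2 = mul a b
    & forall a b w, eqQB w (T_lambda [:: (a, b)]) ->
        \sum_(p <- w) mlact (epsB p.2) p.1 = mul b a].

Definition right_counit (epsC : A -> mult) : Prop :=
  [/\ linear_M epsC, forall a, C (epsC a),
      forall y y' a, C y -> C y' ->
        epsC (mract (mract a (SC y')) y) = mmul y' (mmul (epsC a) y),
      forall a b w, eqQC w (rho_T [:: (a, b)]) ->
        \sum_(p <- w) mract p.2 (epsC p.1) = mul b a
    & forall a b w, eqQC w (lambda_T [:: (a, b)]) ->
        \sum_(p <- w) mract p.1 (SC (epsC p.2)) = mul a b].

Definition adm_IB (om : A -> mult) : Prop :=
  [/\ linear_M om, forall a, B (om a)
    & forall x a, B x -> om (mlact x a) = mmul x (om a)].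
Definition adm_IBup (om : A -> mult) : Prop :=
  [/\ linear_M om, forall a, B (om a)
    & forall x a, B x -> om (mlact (SB x) a) = mmul (om a) x].
Definition adm_IC (om : A -> mult) : Prop :=
  [/\ linear_M om, forall a, C (om a)
    & forall y a, C y -> om (mract a y) = mmul (om a) y].
Definition adm_ICup (om : A -> mult) : Prop :=
  [/\ linear_M om, forall a, C (om a)
    & forall y a, C y -> om (mract a (SC y)) = mmul y (om a)].

Definition is_regular_mha : Prop :=
  [/\ is_mult_bialgebroid,
      [/\ tbijective eqLC eqQB T_lambda, tbijective eqPB eqQB T_rho,
          tbijective eqPC eqQC lambda_T & tbijective eqLB eqQC rho_T]
    & [/\
      (forall a, exists2 s : seq ((A -> mult) * A * A),
         (forall p, List.In p s -> adm_IB p.1.1)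
       & a = \sum_(p <- s) mlact (SB (p.1.1 p.1.2)) p.2),
      (forall a, exists2 s : seq ((A -> mult) * A * A),
         (forall p, List.In p s -> adm_IBup p.1.1)
       & a = \sum_(p <- s) mlact (p.1.1 p.1.2) p.2),
      (forall a, exists2 s : seq ((A -> mult) * A * A),
         (forall p, List.In p s -> adm_IC p.1.1)
       & a = \sum_(p <- s) mract p.2 (SC (p.1.1 p.1.2)))
    &
      (forall a, exists2 s : seq ((A -> mult) * A * A),
         (forall p, List.In p s -> adm_ICup p.1.1)
       & a = \sum_(p <- s) mract p.2 (p.1.1 p.1.2))]].

Definition is_antipode (S : A -> A) : Prop :=
  [/\ (forall a b, S (a + b) = S a + S b) /\ (forall (k : K) a, S (k *: a) = k *: S a),
      bijective S,
      forall a b, S (mul a b) = mul (S b) (S a),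
      forall x y a x' y', B x -> C y -> B x' -> C y' ->
        S (mract (mract (mlact x (mlact y a)) x') y') =
        mlact (SC y') (mlact (SB x') (mract (mract (S a) (SC y)) (SB x)))
    & exists epsB epsC, [/\ left_counit epsB, right_counit epsC,
        forall a b w, eqQB w (T_rho [:: (a, b)]) ->
          tmul (map1 S w) = mlact (SC (epsC a)) b
      & forall a b w, eqQC w (lambda_T [:: (a, b)]) ->
          tmul (map2 S w) = mract a (SB (epsB b))]].

End WithBaseAlgebras.
End MHA.

(* After composing with the appropriate injective canonical map, each equality
   reduces to an identity between canonical maps on simple tensors, such as
   T_rho ((id (x) S) ((a (x) 1) Delta_C(b))) = Delta_B(a)(b (x) 1).  Such an
   identity is checked after multiplying one leg by an arbitrary element (the
   balanced tensor products are non-degenerate modules): multiplicativity of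
   Delta moves that element inside Delta, a mixed coassociativity law regroups
   the resulting triple tensor, and contracting two of its legs with an
   antipode identity such as m (id (x) S) _lambda T = id (x) S_B epsilon_B,
   followed by the counit property, collapses it to a simple tensor.  The
   module properties S(x a) = S(a) S_B(x), ... that make these contractions
   well defined follow from the assumed form of S(x y a x' y') because A is
   spanned by such products. *)
From mathcomp Require Import all_boot all_algebra.
From mathcomp Require Import reals complex.
From Stdlib Require List.
Set Implicit Arguments.
Unset Strict Implicit.
Unset Printing Implicit Defensive.
Import GRing.Theory.
Local Open Scope ring_scope.

Section FormalSums.
Variables (X Y : Type) (g : seq X -> seq X -> Prop) (h : seq Y -> seq Y -> Prop).

Lemma teq_catl s s' t : teq g s t -> teq g (s ++ s') (t ++ s').
Proof. by move=> H; apply: teq_cat => //; apply: teq_refl. Qed.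
Lemma teq_catr s s' t : teq g s t -> teq g (s' ++ s) (s' ++ t).
Proof. by move=> H; apply: teq_cat => //; apply: teq_refl. Qed.

Lemma teq_hom (F : seq X -> seq Y) :
  (forall s t, F (s ++ t) = F s ++ F t) ->
  (forall s t, g s t -> teq h (F s) (F t)) ->
  forall s t, teq g s t -> teq h (F s) (F t).
Proof.
move=> Fcat Fg s t; elim => {s t}.
- by move=> s t /Fg.
- by move=> s; apply: teq_refl.
- by move=> s t _ IH; apply: teq_sym.
- by move=> s t u _ IH1 _ IH2; apply: (teq_trans IH1 IH2).
- by move=> s s' t t' _ IH1 _ IH2; rewrite !Fcat; apply: teq_cat.
- by move=> s t; rewrite !Fcat; apply: teq_swap.
Qed.

Lemma teq_additive (V : nmodType) (F : seq X -> V) :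
  (forall s t, F (s ++ t) = F s + F t) ->
  (forall s t, g s t -> F s = F t) ->
  forall s t, teq g s t -> F s = F t.
Proof.
move=> Fcat Fg s t; elim => {s t}.
- by move=> s t /Fg.
- by [].
- by move=> s t _ ->.
- by move=> s t u _ -> _ ->.
- by move=> s s' t t' _ IH1 _ IH2; rewrite !Fcat IH1 IH2.
- by move=> s t; rewrite !Fcat addrC.
Qed.

Lemma teq_flatten (Z : Type) (f1 f2 : Z -> seq X) s :
  (forall z, teq g (f1 z) (f2 z)) ->
  teq g (flatten (map f1 s)) (flatten (map f2 s)).
Proof.
move=> H; elim: s => [|z s IH] /=; first exact: teq_refl.
exact: teq_cat.
Qed.

End FormalSums.

Lemma teq_perm (X : eqType) (g : seq X -> seq X -> Prop) s t :
  perm_eq s t -> teq g s t.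
Proof.
elim: s t => [|x s IH] t.
  by rewrite perm_sym => /perm_nilP ->; apply: teq_refl.
move=> Hp.
have xt : x \in t by rewrite -(perm_mem Hp) mem_head.
case/splitPr: xt Hp => t1 t2 Hp.
have Hp' : perm_eq s (t1 ++ t2).
  rewrite -(perm_cons x); apply: (perm_trans Hp).
  by apply/permP => y; rewrite /= !count_cat /= addnCA.
apply: (@teq_trans _ _ _ (x :: (t1 ++ t2))).
  exact: (teq_catr [:: x] (IH _ Hp')).
rewrite -cat1s catA (_ : x :: t2 = [:: x] ++ t2) //.
rewrite catA; apply: teq_catl; exact: teq_swap.
Qed.

Section BalancedTensors.
Variable R : realType.
Variable A : lmodType R[i].
Variable bal : A -> A -> A -> A -> Prop.
Local Notation e2 := (teq (gen2 bal)).

Lemma tens0l y : e2 [:: (0, y)] [::].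
Proof. by apply: teq_gen; apply: g2_zero. Qed.

Lemma tens0r x : e2 [:: (x, 0)] [::].
Proof.
apply: (@teq_trans _ _ _ [:: (0 *: x, 0)]).
  rewrite -{1}(scale0r (0 : A)).
  by apply: teq_sym; apply: teq_gen; apply: g2_scal.
by rewrite scale0r; apply: tens0l.
Qed.

Lemma tensDl a a' b : e2 [:: (a + a', b)] [:: (a, b); (a', b)].
Proof. by apply: teq_gen; apply: g2_addl. Qed.
Lemma tensDr a b b' : e2 [:: (a, b + b')] [:: (a, b); (a, b')].
Proof. by apply: teq_gen; apply: g2_addr. Qed.
Lemma tensZ k a b : e2 [:: (k *: a, b)] [:: (a, k *: b)].
Proof. by apply: teq_gen; apply: g2_scal. Qed.
Lemma tens_bal a b a' b' : bal a b a' b' -> e2 [:: (a, b)] [:: (a', b')].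
Proof. by move=> H; apply: teq_gen; apply: g2_bal. Qed.

Lemma tens_suml (I : Type) (f : I -> A) z s :
  e2 (map (fun u => (f u, z)) s) [:: (\sum_(u <- s) f u, z)].
Proof.
elim: s => [|u s IH] /=; first by rewrite big_nil; apply: teq_sym; apply: tens0l.
rewrite big_cons.
apply: (@teq_trans _ _ _ ([:: (f u, z)] ++ [:: (\sum_(j <- s) f j, z)])).
  exact: (teq_catr [:: (f u, z)] IH).
by apply: teq_sym; apply: tensDl.
Qed.

Lemma tens_sumr (I : Type) (f : I -> A) z s :
  e2 (map (fun u => (z, f u)) s) [:: (z, \sum_(u <- s) f u)].
Proof.
elim: s => [|u s IH] /=; first by rewrite big_nil; apply: teq_sym; apply: tens0r.
rewrite big_cons.
apply: (@teq_trans _ _ _ ([:: (z, f u)] ++ [:: (z, \sum_(j <- s) f j)])).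
  exact: (teq_catr [:: (z, f u)] IH).
by apply: teq_sym; apply: tensDr.
Qed.

Lemma tscale0 v : e2 (tscale 0 v) [::].
Proof.
elim: v => [|p v IH] /=; first exact: teq_refl.
rewrite scale0r -cat1s -[[::]]/([::] ++ [::]).
by apply: teq_cat => //; apply: tens0l.
Qed.

Lemma tcat_tscaleN1 v : e2 (v ++ tscale (-1) v) [::].
Proof.
elim: v => [|p v IH] /=; first exact: teq_refl.
apply: (@teq_trans _ _ _ ([:: p; ((-1) *: p.1, p.2)] ++ (v ++ tscale (-1) v))).
  apply: teq_perm.
  by rewrite /= perm_cons -cat1s perm_catCA.
rewrite -[[::]]/([::] ++ [::]); apply: teq_cat => //.
apply: (@teq_trans _ _ _ [:: (p.1 + (-1) *: p.1, p.2)]).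
  by case: p => a b /=; apply: teq_sym; apply: tensDl.
by rewrite scaleN1r subrr; apply: tens0l.
Qed.

Lemma teq_nondegenerate (I : Type) (op : T2 A -> I -> T2 A) :
  (forall u v i, op (u ++ v) i = op u i ++ op v i) ->
  (forall u i, op (tscale (-1) u) i = tscale (-1) (op u i)) ->
  (forall w, (forall i, e2 (op w i) [::]) -> e2 w [::]) ->
  forall u v, (forall i, e2 (op u i) (op v i)) -> e2 u v.
Proof.
move=> Hcat Hsc ND u v H.
have Hw : e2 (u ++ tscale (-1) v) [::].
  apply: ND => i; rewrite Hcat Hsc.
  apply: (@teq_trans _ _ _ (op v i ++ tscale (-1) (op v i))); last exact: tcat_tscaleN1.
  exact: teq_catl.
apply: (@teq_trans _ _ _ (u ++ (tscale (-1) v ++ v))).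
  rewrite -{1}[u]cats0; apply: teq_catr.
  apply: teq_sym; apply: (@teq_trans _ _ _ (v ++ tscale (-1) v)); last exact: tcat_tscaleN1.
  exact: teq_swap.
rewrite catA; apply: (@teq_trans _ _ _ ([::] ++ v)); [exact: teq_catl | exact: teq_refl].
Qed.

Lemma teq2_map (bal' : A -> A -> A -> A -> Prop) (f : A * A -> A * A) :
  (forall s t, gen2 bal s t -> teq (gen2 bal') (map f s) (map f t)) ->
  forall v w, e2 v w -> teq (gen2 bal') (map f v) (map f w).
Proof. by move=> H; apply: teq_hom => // s t; rewrite map_cat. Qed.

Lemma teq3_map (bal3 : A -> A -> A -> A -> A -> A -> Prop) (f : A * A * A -> A * A) :
  (forall s t, gen3 bal3 s t -> e2 (map f s) (map f t)) ->
  forall v w, teq (gen3 bal3) v w -> e2 (map f v) (map f w).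
Proof. by move=> H; apply: teq_hom => // s t; rewrite map_cat. Qed.

Lemma teq2_sum (f : A * A -> A) :
  (forall s t, gen2 bal s t -> \sum_(p <- s) f p = \sum_(p <- t) f p) ->
  forall v w, e2 v w -> \sum_(p <- v) f p = \sum_(p <- w) f p.
Proof.
move=> H; apply: (teq_additive (F := fun s => \sum_(p <- s) f p)) => //.
by move=> s t; rewrite big_cat.
Qed.

End BalancedTensors.

Section RegularMHA.
Variable R : realType.
Local Notation K := (R[i]).
Variable A : lmodType K.
Variable mul : A -> A -> A.
Variables (B C : mult A -> Prop) (SB SC : mult A -> mult A).
Variables (DB DC : A -> T2 A -> T2 A) (LB RB LC RC : A -> A -> T2 A).
Variables (S Sinv : A -> A) (epsB epsC : A -> mult A).

Hypothesis Halg : is_algebra mul.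
Hypothesis Hnd : nondegenerate_alg mul.
Hypothesis HsubB : subalg_M mul B.
Hypothesis HsubC : subalg_M mul C.
Hypothesis HantiB : anti_iso B C SB.
Hypothesis HantiC : anti_iso C B SC.
Hypothesis HlspanB : lspan_full B.
Hypothesis HlspanSB : lspan_full (fun z => exists2 x, B x & z = SB x).
Hypothesis HrspanC : rspan_full C.
Hypothesis HrspanSC : rspan_full (fun z => exists2 y, C y & z = SC y).

Lemma mulA a b c : mul (mul a b) c = mul a (mul b c). Proof. by case: Halg => H _ _ _ _; apply: H. Qed.
Lemma mulDl a b c : mul (a + b) c = mul a c + mul b c. Proof. by case: Halg => _ H _ _ _; apply: H. Qed.
Lemma mulDr a b c : mul a (b + c) = mul a b + mul a c. Proof. by case: Halg => _ _ H _ _; apply: H. Qed.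
Lemma mulZl k a b : mul (k *: a) b = k *: mul a b. Proof. by case: Halg => _ _ _ H _; apply: H. Qed.
Lemma mulZr k a b : mul a (k *: b) = k *: mul a b. Proof. by case: Halg => _ _ _ _ H; apply: H. Qed.
Lemma mul0l b : mul 0 b = 0.
Proof. by rewrite -{1}(scale0r (0 : A)) mulZl scale0r. Qed.
Lemma mul0r b : mul b 0 = 0.
Proof. by rewrite -{1}(scale0r (0 : A)) mulZr scale0r. Qed.
Lemma mulNl a b : mul (- a) b = - mul a b.
Proof. by rewrite -scaleN1r mulZl scaleN1r. Qed.
Lemma mulNr a b : mul a (- b) = - mul a b.
Proof. by rewrite -scaleN1r mulZr scaleN1r. Qed.

Lemma nondeg_eql u v : (forall b, mul u b = mul v b) -> u = v.
Proof.
move=> H; apply/eqP; rewrite -subr_eq0; apply/eqP.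
by case: Hnd => H1 _; apply: H1 => b; rewrite mulDl mulNl H subrr.
Qed.
Lemma nondeg_eqr u v : (forall b, mul b u = mul b v) -> u = v.
Proof.
move=> H; apply/eqP; rewrite -subr_eq0; apply/eqP.
by case: Hnd => _ H1; apply: H1 => b; rewrite mulDr mulNr H subrr.
Qed.

Lemma mul_suml (I : Type) (s : seq I) f b :
  mul (\sum_(i <- s) f i) b = \sum_(i <- s) mul (f i) b.
Proof. elim: s => [|i s IH]; by rewrite ?big_nil ?mul0l // !big_cons mulDl IH. Qed.
Lemma mul_sumr (I : Type) (s : seq I) f b :
  mul b (\sum_(i <- s) f i) = \sum_(i <- s) mul b (f i).
Proof. elim: s => [|i s IH]; by rewrite ?big_nil ?mul0r // !big_cons mulDr IH. Qed.

Section Multiplier.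
Variable x : mult A.
Hypothesis Hx : is_mult mul x.
Lemma mlactM a b : mlact x (mul a b) = mul (mlact x a) b. Proof. by case: Hx => H _ _; apply: H. Qed.
Lemma mractM a b : mract (mul a b) x = mul a (mract b x). Proof. by case: Hx => _ H _; apply: H. Qed.
Lemma mul_mlact a b : mul a (mlact x b) = mul (mract a x) b. Proof. by case: Hx => _ _ H; apply: H. Qed.
Lemma mlactD a b : mlact x (a + b) = mlact x a + mlact x b.
Proof. by apply: nondeg_eqr => c; rewrite mul_mlact !mulDr !mul_mlact. Qed.
Lemma mlactZ k a : mlact x (k *: a) = k *: mlact x a.
Proof. by apply: nondeg_eqr => c; rewrite mul_mlact !mulZr mul_mlact. Qed.
Lemma mractD a b : mract (a + b) x = mract a x + mract b x.
Proof. by apply: nondeg_eql => c; rewrite -mul_mlact !mulDl -!mul_mlact. Qed.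
Lemma mractZ k a : mract (k *: a) x = k *: mract a x.
Proof. by apply: nondeg_eql => c; rewrite -mul_mlact !mulZl -mul_mlact. Qed.
Lemma mlact0 : mlact x 0 = 0.
Proof. by rewrite -(scale0r (0 : A)) mlactZ !scale0r. Qed.
Lemma mract0 : mract 0 x = 0.
Proof. by rewrite -(scale0r (0 : A)) mractZ !scale0r. Qed.
End Multiplier.

Lemma mlact_mract x y a : is_mult mul x -> is_mult mul y ->
  mlact x (mract a y) = mract (mlact x a) y.
Proof.
move=> Hx Hy; apply: nondeg_eqr => c.
by rewrite (mul_mlact Hx) -(mractM Hy) -(mul_mlact Hx) (mractM Hy).
Qed.

Lemma B_mult x : B x -> is_mult mul x. Proof. by case: HsubB => H _ _ _ _; apply: H. Qed.
Lemma C_mult y : C y -> is_mult mul y. Proof. by case: HsubC => H _ _ _ _; apply: H. Qed.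
Lemma B_mmul x x' : B x -> B x' -> B (mmul x x'). Proof. by case: HsubB => _ _ _ _ H; apply: H. Qed.
Lemma C_mmul x x' : C x -> C x' -> C (mmul x x'). Proof. by case: HsubC => _ _ _ _ H; apply: H. Qed.
Lemma C_SB x : B x -> C (SB x). Proof. by case: HantiB => H _ _ _ _; apply: H. Qed.
Lemma B_SC y : C y -> B (SC y). Proof. by case: HantiC => H _ _ _ _; apply: H. Qed.
Lemma SB_mmul x x' : B x -> B x' -> SB (mmul x x') = mmul (SB x') (SB x).
Proof. by case: HantiB => _ _ _ H _; apply: H. Qed.
Lemma SC_mmul x x' : C x -> C x' -> SC (mmul x x') = mmul (SC x') (SC x).
Proof. by case: HantiC => _ _ _ H _; apply: H. Qed.
Lemma SB_mult x : B x -> is_mult mul (SB x). Proof. by move/C_SB/C_mult. Qed.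
Lemma SC_mult y : C y -> is_mult mul (SC y). Proof. by move/B_SC/B_mult. Qed.

Definition add_closed (Q : A -> Prop) := Q 0 /\ (forall a b, Q a -> Q b -> Q (a + b)).

Lemma add_closed_sum (Q : A -> Prop) (I : Type) (s : seq I) f :
  add_closed Q -> (forall i, List.In i s -> Q (f i)) -> Q (\sum_(i <- s) f i).
Proof.
case=> H0 HD; elim: s => [|i s IH] H; first by rewrite big_nil.
rewrite big_cons; apply: HD; first by apply: H; left.
by apply: IH => j Hj; apply: H; right.
Qed.

Lemma span_mlactB (Q : A -> Prop) : add_closed Q -> (forall x a, B x -> Q (mlact x a)) -> forall a, Q a.
Proof.
move=> HQ H a; case: (HlspanB a) => s Hs ->.
by apply: add_closed_sum => // p /Hs; apply: H.
Qed.
Lemma span_mlactC (Q : A -> Prop) : add_closed Q -> (forall y a, C y -> Q (mlact y a)) -> forall a, Q a.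
Proof.
move=> HQ H a; case: (HlspanSB a) => s Hs ->.
apply: add_closed_sum => // p /Hs [x Bx ->]; apply: H; exact: C_SB.
Qed.
Lemma span_mractC (Q : A -> Prop) : add_closed Q -> (forall y a, C y -> Q (mract a y)) -> forall a, Q a.
Proof.
move=> HQ H a; case: (HrspanC a) => s Hs ->.
by apply: add_closed_sum => // p /Hs; apply: H.
Qed.
Lemma span_mractB (Q : A -> Prop) : add_closed Q -> (forall x a, B x -> Q (mract a x)) -> forall a, Q a.
Proof.
move=> HQ H a; case: (HrspanSC a) => s Hs ->.
apply: add_closed_sum => // p /Hs [y Cy ->]; apply: H; exact: B_SC.
Qed.

Lemma span_bimodule (Q : A -> Prop) : add_closed Q ->
  (forall x y a x' y', B x -> C y -> B x' -> C y' ->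
     Q (mract (mract (mlact x (mlact y a)) x') y')) -> forall a, Q a.
Proof.
move=> [H0 HD] H; apply: span_mlactB; first by split.
move=> x a1 Bx; have mx := B_mult Bx.
apply: (span_mlactC (Q := fun a => Q (mlact x a))).
  by split; [rewrite mlact0 | move=> a b Ha Hb; rewrite mlactD //; apply: HD].
move=> y a2 Cy; have my := C_mult Cy.
apply: (span_mractC (Q := fun a => Q (mlact x (mlact y a)))).
  by split; [rewrite !mlact0 | move=> a b Ha Hb; rewrite !mlactD //; apply: HD].
move=> y' a3 Cy'; have my' := C_mult Cy'.
apply: (span_mractB (Q := fun a => Q (mlact x (mlact y (mract a y'))))).
  by split; [rewrite mract0 // !mlact0 | move=> a b Ha Hb; rewrite mractD // !mlactD //; apply: HD].
move=> x' a4 Bx'; have mx' := B_mult Bx'.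
rewrite (mlact_mract _ my my') (mlact_mract _ mx my') (mlact_mract _ my mx') (mlact_mract _ mx mx').
exact: H.
Qed.

Hypothesis HSadd : forall a b, S (a + b) = S a + S b.
Hypothesis HSscale : forall (k : K) a, S (k *: a) = k *: S a.
Hypothesis HSK : cancel S Sinv.
Hypothesis HKS : cancel Sinv S.
Hypothesis HSmul : forall a b, S (mul a b) = mul (S b) (S a).
Hypothesis HSform : forall x y a x' y', B x -> C y -> B x' -> C y' ->
        S (mract (mract (mlact x (mlact y a)) x') y') =
        mlact (SC y') (mlact (SB x') (mract (mract (S a) (SC y)) (SB x))).

Lemma S0 : S 0 = 0.
Proof. by rewrite -(scale0r (0 : A)) HSscale !scale0r. Qed.

Lemma S_mlactB x a : B x -> S (mlact x a) = mract (S a) (SB x).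
Proof.
move=> Bx; have mx := B_mult Bx; have msx := SB_mult Bx.
move: a; apply: span_bimodule.
  split; first by rewrite mlact0 // S0 mract0.
  by move=> a b Ha Hb; rewrite mlactD // !HSadd Ha Hb mractD.
move=> x1 y a x' y' Bx1 Cy Bx' Cy'.
rewrite (mlact_mract _ mx (C_mult Cy')) (mlact_mract _ mx (B_mult Bx')).
have -> : mlact x (mlact x1 (mlact y a)) = mlact (mmul x x1) (mlact y a) by [].
rewrite !HSform //; last exact: B_mmul.
rewrite (SB_mmul Bx Bx1).
rewrite -(mlact_mract _ (SC_mult Cy') msx) -(mlact_mract _ (SB_mult Bx') msx).
by [].
Qed.

Lemma S_mractC y a : C y -> S (mract a y) = mlact (SC y) (S a).
Proof.
move=> Cy; have my := C_mult Cy; have msy := SC_mult Cy.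
move: a; apply: span_bimodule.
  split; first by rewrite mract0 // S0 mlact0.
  by move=> a b Ha Hb; rewrite mractD // !HSadd Ha Hb mlactD.
move=> x1 y1 a x' y' Bx1 Cy1 Bx' Cy'.
have -> : mract (mract (mract (mlact x1 (mlact y1 a)) x') y') y =
          mract (mract (mlact x1 (mlact y1 a)) x') (mmul y' y) by [].
rewrite !HSform //; last exact: C_mmul.
by rewrite (SC_mmul Cy' Cy).
Qed.

Lemma S_mlactC y a : C y -> S (mlact y a) = mract (S a) (SC y).
Proof.
move=> Cy; apply: nondeg_eql => b; rewrite -(HKS b).
rewrite -HSmul (mul_mlact (C_mult Cy)) HSmul (S_mractC _ Cy).
by rewrite (mul_mlact (SC_mult Cy)).
Qed.

Lemma S_mractB x a : B x -> S (mract a x) = mlact (SB x) (S a).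
Proof.
move=> Bx; apply: nondeg_eqr => b; rewrite -(HKS b).
rewrite -HSmul -(mul_mlact (B_mult Bx)) HSmul (S_mlactB _ Bx).
by rewrite (mul_mlact (SB_mult Bx)).
Qed.

Lemma S_inj a b : S a = S b -> a = b.
Proof. by move=> H; rewrite -(HSK a) H HSK. Qed.

Lemma SinvD a b : Sinv (a + b) = Sinv a + Sinv b.
Proof. by apply: S_inj; rewrite HSadd !HKS. Qed.
Lemma SinvZ k a : Sinv (k *: a) = k *: Sinv a.
Proof. by apply: S_inj; rewrite HSscale !HKS. Qed.
Lemma Sinv0 : Sinv 0 = 0.
Proof. by apply: S_inj; rewrite HKS S0. Qed.
Lemma SinvM a b : Sinv (mul a b) = mul (Sinv b) (Sinv a).
Proof. by apply: S_inj; rewrite HSmul !HKS. Qed.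
Lemma Sinv_mractSB x d : B x -> Sinv (mract d (SB x)) = mlact x (Sinv d).
Proof. by move=> Bx; apply: S_inj; rewrite HKS S_mlactB // HKS. Qed.
Lemma Sinv_mractSC y d : C y -> Sinv (mract d (SC y)) = mlact y (Sinv d).
Proof. by move=> Cy; apply: S_inj; rewrite HKS S_mlactC // HKS. Qed.
Lemma Sinv_mlactSB x d : B x -> Sinv (mlact (SB x) d) = mract (Sinv d) x.
Proof. by move=> Bx; apply: S_inj; rewrite HKS S_mractB // HKS. Qed.
Lemma Sinv_mlactSC y d : C y -> Sinv (mlact (SC y) d) = mract (Sinv d) y.
Proof. by move=> Cy; apply: S_inj; rewrite HKS S_mractC // HKS. Qed.
Lemma Sinv_sum (I : Type) (s : seq I) f : Sinv (\sum_(i <- s) f i) = \sum_(i <- s) Sinv (f i).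
Proof. elim: s => [|i s IH]; by rewrite ?big_nil ?Sinv0 // !big_cons SinvD IH. Qed.

Local Notation eQB := (eqQB B SB).
Local Notation eQC := (eqQC C SC).
Local Notation ePB := (eqPB B).
Local Notation ePC := (eqPC C).
Local Notation eLB := (eqLB B).
Local Notation eLC := (eqLC C).

Hypothesis HndQB1 : forall w, (forall a, eQB (rmul1 mul w a) [::]) -> eQB w [::].
Hypothesis HndQB2 : forall w, (forall b, eQB (rmul2 mul w b) [::]) -> eQB w [::].
Hypothesis HndQC1 : forall w, (forall a, eQC (lmul1 mul a w) [::]) -> eQC w [::].
Hypothesis HndQC2 : forall w, (forall b, eQC (lmul2 mul b w) [::]) -> eQC w [::].
Hypothesis HDBlin : forall c, tlinear_endo eQB (DB c).
Hypothesis HDBLR : forall c a b, eQB (DB c [:: (a, b)]) (rmul2 mul (LB c a) b) /\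
                                 eQB (DB c [:: (a, b)]) (rmul1 mul (RB c b) a).
Hypothesis HDBmul : forall c d w, eQB (DB (mul c d) w) (DB c (DB d w)).
Hypothesis HDClin : forall c, tlinear_endo eQC (DC c).
Hypothesis HDCLR : forall c a b, eQC (DC c [:: (a, b)]) (lmul2 mul b (LC c a)) /\
                                 eQC (DC c [:: (a, b)]) (lmul1 mul a (RC c b)).
Hypothesis HDCmul : forall c d w, eQC (DC (mul c d) w) (DC d (DC c w)).
Hypothesis HbTl : tbijective eLC eQB (T_lambda LB).
Hypothesis HbTr : tbijective ePB eQB (T_rho RB).
Hypothesis HblT : tbijective ePC eQC (lambda_T LC).
Hypothesis HbrT : tbijective eLB eQC (rho_T RC).

Lemma rmul1_eqQB d v w : eQB v w -> eQB (rmul1 mul v d) (rmul1 mul w d).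
Proof.
apply: teq2_map => s t; case => [a a' b|a b b'|k a b|b|a b a' b' []] /=.
- by rewrite mulDl; apply: tensDl.
- by apply: tensDr.
- by rewrite mulZl; apply: tensZ.
- by rewrite mul0l; apply: tens0l.
- move=> x a0 b0 Bx; rewrite -(mlactM (B_mult Bx)); apply: tens_bal; exact: bQB.
Qed.

Lemma rmul2_eqQB d v w : eQB v w -> eQB (rmul2 mul v d) (rmul2 mul w d).
Proof.
apply: teq2_map => s t; case => [a a' b|a b b'|k a b|b|a b a' b' []] /=.
- by apply: tensDl.
- by rewrite mulDl; apply: tensDr.
- by rewrite mulZl; apply: tensZ.
- by apply: tens0l.
- move=> x a0 b0 Bx; rewrite -(mlactM (SB_mult Bx)); apply: tens_bal; exact: bQB.
Qed.

Lemma lmul1_eqQC d v w : eQC v w -> eQC (lmul1 mul d v) (lmul1 mul d w).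
Proof.
apply: teq2_map => s t; case => [a a' b|a b b'|k a b|b|a b a' b' []] /=.
- by rewrite mulDr; apply: tensDl.
- by apply: tensDr.
- by rewrite mulZr; apply: tensZ.
- by rewrite mul0r; apply: tens0l.
- move=> y a0 b0 Cy; rewrite -(mractM (SC_mult Cy)); apply: tens_bal; exact: bQC.
Qed.

Lemma lmul2_eqQC d v w : eQC v w -> eQC (lmul2 mul d v) (lmul2 mul d w).
Proof.
apply: teq2_map => s t; case => [a a' b|a b b'|k a b|b|a b a' b' []] /=.
- by apply: tensDl.
- by rewrite mulDr; apply: tensDr.
- by rewrite mulZr; apply: tensZ.
- by apply: tens0l.
- move=> y a0 b0 Cy; rewrite -(mractM (C_mult Cy)); apply: tens_bal; exact: bQC.
Qed.

Lemma eqQB_by_rmul1 u v : (forall d, eQB (rmul1 mul u d) (rmul1 mul v d)) -> eQB u v.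
Proof.
apply: (teq_nondegenerate (op := fun w d => rmul1 mul w d)) => //.
- by move=> ? ? ?; rewrite /rmul1 map_cat.
- by move=> w d; rewrite /rmul1 /tscale -!map_comp; apply: eq_map => p /=; rewrite mulZl.
Qed.
Lemma eqQB_by_rmul2 u v : (forall d, eQB (rmul2 mul u d) (rmul2 mul v d)) -> eQB u v.
Proof.
apply: (teq_nondegenerate (op := fun w d => rmul2 mul w d)) => //.
- by move=> ? ? ?; rewrite /rmul2 map_cat.
- by move=> w d; rewrite /rmul2 /tscale -!map_comp.
Qed.
Lemma eqQC_by_lmul1 u v : (forall d, eQC (lmul1 mul d u) (lmul1 mul d v)) -> eQC u v.
Proof.
apply: (teq_nondegenerate (op := fun w d => lmul1 mul d w)) => //.
- by move=> ? ? ?; rewrite /lmul1 map_cat.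
- by move=> w d; rewrite /lmul1 /tscale -!map_comp; apply: eq_map => p /=; rewrite mulZr.
Qed.
Lemma eqQC_by_lmul2 u v : (forall d, eQC (lmul2 mul d u) (lmul2 mul d v)) -> eQC u v.
Proof.
apply: (teq_nondegenerate (op := fun w d => lmul2 mul d w)) => //.
- by move=> ? ? ?; rewrite /lmul2 map_cat.
- by move=> w d; rewrite /lmul2 /tscale -!map_comp.
Qed.

Lemma DB_resp c v w : eQB v w -> eQB (DB c v) (DB c w).
Proof. by case: (HDBlin c) => H _ _; apply: H. Qed.
Lemma DB_cat c v w : eQB (DB c (v ++ w)) (DB c v ++ DB c w).
Proof. by case: (HDBlin c) => _ H _; apply: H. Qed.
Lemma DB_nil c : eQB (DB c [::]) [::].
Proof.
case: (HDBlin c) => _ _ H; apply: (teq_trans (H 0 [::])); exact: tscale0.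
Qed.
Lemma DB_flat c (I : Type) (f : I -> T2 A) s :
  eQB (DB c (flatten (map f s))) (flatten (map (fun i => DB c (f i)) s)).
Proof.
elim: s => [|i s IH] /=; first exact: DB_nil.
apply: (teq_trans (DB_cat _ _ _)); exact: teq_catr.
Qed.
Lemma rmul1_RB p q d : eQB (rmul1 mul (RB p q) d) (DB p [:: (d, q)]).
Proof. by apply: teq_sym; case: (HDBLR p d q). Qed.
Lemma rmul2_LB p q d : eQB (rmul2 mul (LB p d) q) (DB p [:: (d, q)]).
Proof. by apply: teq_sym; case: (HDBLR p d q). Qed.

Lemma rmul2_cat v w z : rmul2 mul (v ++ w) z = rmul2 mul v z ++ rmul2 mul w z.
Proof. by rewrite /rmul2 map_cat. Qed.
Lemma rmul1_cat v w z : rmul1 mul (v ++ w) z = rmul1 mul v z ++ rmul1 mul w z.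
Proof. by rewrite /rmul1 map_cat. Qed.
Lemma lmul2_cat v w z : lmul2 mul z (v ++ w) = lmul2 mul z v ++ lmul2 mul z w.
Proof. by rewrite /lmul2 map_cat. Qed.
Lemma lmul1_cat v w z : lmul1 mul z (v ++ w) = lmul1 mul z v ++ lmul1 mul z w.
Proof. by rewrite /lmul1 map_cat. Qed.
Lemma rmul2_rmul2 v q z : rmul2 mul (rmul2 mul v q) z = rmul2 mul v (mul q z).
Proof. by rewrite /rmul2 -map_comp; apply: eq_map => p /=; rewrite mulA. Qed.
Lemma rmul1_rmul1 v q z : rmul1 mul (rmul1 mul v q) z = rmul1 mul v (mul q z).
Proof. by rewrite /rmul1 -map_comp; apply: eq_map => p /=; rewrite mulA. Qed.
Lemma lmul2_lmul2 v q z : lmul2 mul z (lmul2 mul q v) = lmul2 mul (mul z q) v.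
Proof. by rewrite /lmul2 -map_comp; apply: eq_map => p /=; rewrite mulA. Qed.
Lemma lmul1_lmul1 v q z : lmul1 mul z (lmul1 mul q v) = lmul1 mul (mul z q) v.
Proof. by rewrite /lmul1 -map_comp; apply: eq_map => p /=; rewrite mulA. Qed.
Lemma rmul1_rmul2 v q z : rmul1 mul (rmul2 mul v q) z = rmul2 mul (rmul1 mul v z) q.
Proof. by rewrite /rmul1 /rmul2 -!map_comp. Qed.
Lemma lmul1_lmul2 v q z : lmul1 mul z (lmul2 mul q v) = lmul2 mul q (lmul1 mul z v).
Proof. by rewrite /lmul1 /lmul2 -!map_comp. Qed.

Lemma DB_rmul2 p v z : eQB (DB p (rmul2 mul v z)) (rmul2 mul (DB p v) z).
Proof.
elim: v => [|[u1 u2] v IH].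
  apply: (teq_trans (DB_nil _)); apply: teq_sym.
  exact: (rmul2_eqQB z (DB_nil p)).
rewrite -cat1s rmul2_cat.
apply: (teq_trans (DB_cat _ _ _)).
apply: (@teq_trans _ _ _ (rmul2 mul (DB p [:: (u1, u2)]) z ++ rmul2 mul (DB p v) z)).
  apply: teq_cat => //=.
  apply: (teq_trans (teq_sym (rmul2_LB _ _ _))); rewrite -rmul2_rmul2.
  by apply: rmul2_eqQB; apply: rmul2_LB.
rewrite -rmul2_cat; apply: rmul2_eqQB; apply: teq_sym; exact: DB_cat.
Qed.

Lemma DB_rmul1 p v z : eQB (DB p (rmul1 mul v z)) (rmul1 mul (DB p v) z).
Proof.
elim: v => [|[u1 u2] v IH].
  apply: (teq_trans (DB_nil _)); apply: teq_sym.
  exact: (rmul1_eqQB z (DB_nil p)).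
rewrite -cat1s rmul1_cat.
apply: (teq_trans (DB_cat _ _ _)).
apply: (@teq_trans _ _ _ (rmul1 mul (DB p [:: (u1, u2)]) z ++ rmul1 mul (DB p v) z)).
  apply: teq_cat => //=.
  apply: (teq_trans (teq_sym (rmul1_RB _ _ _))); rewrite -rmul1_rmul1.
  by apply: rmul1_eqQB; apply: rmul1_RB.
rewrite -rmul1_cat; apply: rmul1_eqQB; apply: teq_sym; exact: DB_cat.
Qed.

Lemma RB_mull a p z : eQB (RB (mul a p) z) (DB a (RB p z)).
Proof.
apply: eqQB_by_rmul1 => d.
apply: (teq_trans (rmul1_RB _ _ _)); apply: (teq_trans (HDBmul _ _ _)).
apply: (teq_trans (DB_resp _ (teq_sym (rmul1_RB _ _ _)))); exact: DB_rmul1.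
Qed.

Lemma RB_mulr p q z : eQB (RB p (mul q z)) (rmul2 mul (RB p q) z).
Proof.
apply: eqQB_by_rmul1 => d.
apply: (teq_trans (rmul1_RB _ _ _)); rewrite rmul1_rmul2.
apply: teq_sym; apply: (teq_trans (rmul2_eqQB _ (rmul1_RB _ _ _))).
apply: teq_sym; apply: (@teq_trans _ _ _ (DB p (rmul2 mul [:: (d, q)] z))); [exact: teq_refl | exact: DB_rmul2].
Qed.

Lemma LB_mulr p u v : eQB (LB p (mul u v)) (rmul1 mul (LB p u) v).
Proof.
apply: eqQB_by_rmul2 => z.
apply: (teq_trans (rmul2_LB _ _ _)); rewrite -rmul1_rmul2.
apply: teq_sym; apply: (teq_trans (rmul1_eqQB _ (rmul2_LB _ _ _))).
apply: teq_sym; apply: (@teq_trans _ _ _ (DB p (rmul1 mul [:: (u, z)] v))); [exact: teq_refl | exact: DB_rmul1].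
Qed.

Lemma LB_mull c q u : eQB (LB (mul c q) u) (DB c (LB q u)).
Proof.
apply: eqQB_by_rmul2 => z.
apply: (teq_trans (rmul2_LB _ _ _)); apply: (teq_trans (HDBmul _ _ _)).
apply: (teq_trans (DB_resp _ (teq_sym (rmul2_LB _ _ _)))); exact: DB_rmul2.
Qed.

Lemma DC_resp c v w : eQC v w -> eQC (DC c v) (DC c w).
Proof. by case: (HDClin c) => H _ _; apply: H. Qed.
Lemma DC_cat c v w : eQC (DC c (v ++ w)) (DC c v ++ DC c w).
Proof. by case: (HDClin c) => _ H _; apply: H. Qed.
Lemma DC_nil c : eQC (DC c [::]) [::].
Proof.
case: (HDClin c) => _ _ H; apply: (teq_trans (H 0 [::])); exact: tscale0.
Qed.
Lemma DC_flat c (I : Type) (f : I -> T2 A) s :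
  eQC (DC c (flatten (map f s))) (flatten (map (fun i => DC c (f i)) s)).
Proof.
elim: s => [|i s IH] /=; first exact: DC_nil.
apply: (teq_trans (DC_cat _ _ _)); exact: teq_catr.
Qed.
Lemma lmul1_RC c a b : eQC (lmul1 mul a (RC c b)) (DC c [:: (a, b)]).
Proof. by apply: teq_sym; case: (HDCLR c a b). Qed.
Lemma lmul2_LC c a b : eQC (lmul2 mul b (LC c a)) (DC c [:: (a, b)]).
Proof. by apply: teq_sym; case: (HDCLR c a b). Qed.

Lemma DC_lmul2 p v z : eQC (DC p (lmul2 mul z v)) (lmul2 mul z (DC p v)).
Proof.
elim: v => [|[u1 u2] v IH].
  apply: (teq_trans (DC_nil _)); apply: teq_sym.
  exact: (lmul2_eqQC z (DC_nil p)).
rewrite -cat1s lmul2_cat.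
apply: (teq_trans (DC_cat _ _ _)).
apply: (@teq_trans _ _ _ (lmul2 mul z (DC p [:: (u1, u2)]) ++ lmul2 mul z (DC p v))).
  apply: teq_cat => //=.
  apply: (teq_trans (teq_sym (lmul2_LC _ _ _))); rewrite -lmul2_lmul2.
  by apply: lmul2_eqQC; apply: lmul2_LC.
rewrite -lmul2_cat; apply: lmul2_eqQC; apply: teq_sym; exact: DC_cat.
Qed.

Lemma DC_lmul1 p v z : eQC (DC p (lmul1 mul z v)) (lmul1 mul z (DC p v)).
Proof.
elim: v => [|[u1 u2] v IH].
  apply: (teq_trans (DC_nil _)); apply: teq_sym.
  exact: (lmul1_eqQC z (DC_nil p)).
rewrite -cat1s lmul1_cat.
apply: (teq_trans (DC_cat _ _ _)).
apply: (@teq_trans _ _ _ (lmul1 mul z (DC p [:: (u1, u2)]) ++ lmul1 mul z (DC p v))).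
  apply: teq_cat => //=.
  apply: (teq_trans (teq_sym (lmul1_RC _ _ _))); rewrite -lmul1_lmul1.
  by apply: lmul1_eqQC; apply: lmul1_RC.
rewrite -lmul1_cat; apply: lmul1_eqQC; apply: teq_sym; exact: DC_cat.
Qed.

Lemma LC_mull q b u : eQC (LC (mul q b) u) (DC b (LC q u)).
Proof.
apply: eqQC_by_lmul2 => f.
apply: (teq_trans (lmul2_LC _ _ _)); apply: (teq_trans (HDCmul _ _ _)).
apply: (teq_trans (DC_resp _ (teq_sym (lmul2_LC _ _ _)))); exact: DC_lmul2.
Qed.

Lemma LC_mulr q e u : eQC (LC q (mul e u)) (lmul1 mul e (LC q u)).
Proof.
apply: eqQC_by_lmul2 => f.
apply: (teq_trans (lmul2_LC _ _ _)); rewrite -lmul1_lmul2.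
apply: teq_sym; apply: (teq_trans (lmul1_eqQC _ (lmul2_LC _ _ _))).
apply: teq_sym; apply: (@teq_trans _ _ _ (DC q (lmul1 mul e [:: (u, f)]))); [exact: teq_refl | exact: DC_lmul1].
Qed.

Lemma RC_mulr q f a : eQC (RC q (mul f a)) (lmul2 mul f (RC q a)).
Proof.
apply: eqQC_by_lmul1 => e.
apply: (teq_trans (lmul1_RC _ _ _)); rewrite lmul1_lmul2.
apply: teq_sym; apply: (teq_trans (lmul2_eqQC _ (lmul1_RC _ _ _))).
apply: teq_sym; apply: (@teq_trans _ _ _ (DC q (lmul2 mul f [:: (e, a)]))); [exact: teq_refl | exact: DC_lmul2].
Qed.

Lemma RC_mull p d z : eQC (RC (mul p d) z) (DC d (RC p z)).
Proof.
apply: eqQC_by_lmul1 => e.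
apply: (teq_trans (lmul1_RC _ _ _)); apply: (teq_trans (HDCmul _ _ _)).
apply: (teq_trans (DC_resp _ (teq_sym (lmul1_RC _ _ _)))); exact: DC_lmul1.
Qed.

Hypothesis HcoBC : forall a b c, eqBC3 B C SB SC (ext_l (fun p => LB p a) (RC b c))
                                    (ext_r (fun q => RC q c) (LB b a)).
Hypothesis HcoCB : forall a b c, eqCB3 B C SB SC (ext_l (fun p => LC p a) (RB b c))
                                    (ext_r (fun q => RB q c) (LC b a)).
Hypothesis HepsB : left_counit mul B SB LB RB epsB.
Hypothesis HepsC : right_counit mul C SC LC RC epsC.
Hypothesis HantB : forall a b w, eQB w (T_rho RB [:: (a, b)]) ->
          tmul mul (map1 S w) = mlact (SC (epsC a)) b.
Hypothesis HantC : forall a b w, eQC w (lambda_T LC [:: (a, b)]) ->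
          tmul mul (map2 S w) = mract a (SB (epsB b)).

Lemma epsB_B a : B (epsB a). Proof. by case: HepsB => _ H _ _ _; apply: H. Qed.
Lemma epsC_C a : C (epsC a). Proof. by case: HepsC => _ H _ _ _; apply: H. Qed.

Lemma map2S_QC_PB v w : eQC v w -> ePB (map2 S v) (map2 S w).
Proof.
apply: teq2_map => s t; case => [a a' b|a b b'|k a b|b|a b a' b' []] /=.
- by apply: tensDl.
- by rewrite HSadd; apply: tensDr.
- by rewrite HSscale; apply: tensZ.
- by apply: tens0l.
- move=> y a0 b0 Cy; rewrite S_mractC //; apply: tens_bal; apply: bPB; exact: B_SC.
Qed.

Lemma map1Sinv_QC_LC v w : eQC v w -> eLC (map1 Sinv v) (map1 Sinv w).
Proof.
apply: teq2_map => s t; case => [a a' b|a b b'|k a b|b|a b a' b' []] /=.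
- by rewrite SinvD; apply: tensDl.
- by apply: tensDr.
- by rewrite SinvZ; apply: tensZ.
- by rewrite Sinv0; apply: tens0l.
- move=> y a0 b0 Cy; rewrite Sinv_mractSC //; apply: tens_bal; exact: bLC.
Qed.

Lemma map1S_LC_QC v w : eLC v w -> eQC (map1 S v) (map1 S w).
Proof.
apply: teq2_map => s t; case => [a a' b|a b b'|k a b|b|a b a' b' []] /=.
- by rewrite HSadd; apply: tensDl.
- by apply: tensDr.
- by rewrite HSscale; apply: tensZ.
- by rewrite S0; apply: tens0l.
- move=> y a0 b0 Cy; rewrite S_mlactC //; apply: tens_bal; exact: bQC.
Qed.

Lemma map1S_QB_PC v w : eQB v w -> ePC (map1 S v) (map1 S w).
Proof.
apply: teq2_map => s t; case => [a a' b|a b b'|k a b|b|a b a' b' []] /=.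
- by rewrite HSadd; apply: tensDl.
- by apply: tensDr.
- by rewrite HSscale; apply: tensZ.
- by rewrite S0; apply: tens0l.
- move=> x a0 b0 Bx; rewrite S_mlactB //; apply: tens_bal; apply: bPC; exact: C_SB.
Qed.

Lemma map2Sinv_QB_LB v w : eQB v w -> eLB (map2 Sinv v) (map2 Sinv w).
Proof.
apply: teq2_map => s t; case => [a a' b|a b b'|k a b|b|a b a' b' []] /=.
- by apply: tensDl.
- by rewrite SinvD; apply: tensDr.
- by rewrite SinvZ; apply: tensZ.
- by apply: tens0l.
- move=> x a0 b0 Bx; rewrite Sinv_mlactSB //; apply: tens_bal; exact: bLB.
Qed.

Lemma map2S_LB_QB v w : eLB v w -> eQB (map2 S v) (map2 S w).
Proof.
apply: teq2_map => s t; case => [a a' b|a b b'|k a b|b|a b a' b' []] /=.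
- by apply: tensDl.
- by rewrite HSadd; apply: tensDr.
- by rewrite HSscale; apply: tensZ.
- by apply: tens0l.
- move=> x a0 b0 Bx; rewrite S_mractB //; apply: tens_bal; exact: bQB.
Qed.

Lemma flip_PB_LB v w : ePB v w -> eLB (flip v) (flip w).
Proof.
apply: teq2_map => s t; case => [a a' b|a b b'|k a b|b|a b a' b' []] /=.
- by apply: tensDr.
- by apply: tensDl.
- by apply: teq_sym; apply: tensZ.
- by apply: tens0r.
- move=> x a0 b0 Bx; apply: teq_sym; apply: tens_bal; exact: bLB.
Qed.

Lemma flip_PC_LC v w : ePC v w -> eLC (flip v) (flip w).
Proof.
apply: teq2_map => s t; case => [a a' b|a b b'|k a b|b|a b a' b' []] /=.
- by apply: tensDr.
- by apply: tensDl.
- by apply: teq_sym; apply: tensZ.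
- by apply: tens0r.
- move=> x a0 b0 Bx; apply: teq_sym; apply: tens_bal; exact: bLC.
Qed.

Lemma tmul_map2S_QC v w : eQC v w -> tmul mul (map2 S v) = tmul mul (map2 S w).
Proof.
rewrite /tmul /map2 !big_map.
apply: (teq2_sum (f := fun p => mul p.1 (S p.2))) => s t.
case => [a a' b|a b b'|k a b|b|a b a' b' [y a0 b0 Cy]]; rewrite !big_cons !big_nil /= ?addr0.
- by rewrite mulDl.
- by rewrite HSadd mulDr.
- by rewrite HSscale mulZl mulZr.
- by rewrite mul0l.
- by rewrite S_mractC // (mul_mlact (SC_mult Cy)).
Qed.

Lemma tmul_map1S_QB v w : eQB v w -> tmul mul (map1 S v) = tmul mul (map1 S w).
Proof.
rewrite /tmul /map1 !big_map.
apply: (teq2_sum (f := fun p => mul (S p.1) p.2)) => s t.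
case => [a a' b|a b b'|k a b|b|a b a' b' [y a0 b0 Cy]]; rewrite !big_cons !big_nil /= ?addr0.
- by rewrite HSadd mulDl.
- by rewrite mulDr.
- by rewrite HSscale mulZl mulZr.
- by rewrite S0 mul0l.
- by rewrite S_mlactB // (mul_mlact (SB_mult Cy)).
Qed.

Lemma tmul_lmul1 e w : tmul mul (lmul1 mul e w) = mul e (tmul mul w).
Proof. by rewrite /tmul /lmul1 big_map mul_sumr; apply: eq_bigr => p _; rewrite mulA. Qed.
Lemma tmul_rmul2 e w : tmul mul (rmul2 mul w e) = mul (tmul mul w) e.
Proof. by rewrite /tmul /rmul2 big_map mul_suml; apply: eq_bigr => p _; rewrite mulA. Qed.

Lemma tmul_map2S_RC y c : tmul mul (map2 S (RC y c)) = mlact (SB (epsB y)) (S c).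
Proof.
have mB := SB_mult (epsB_B y).
apply: nondeg_eqr => e.
rewrite -tmul_lmul1 (mul_mlact mB).
have -> : lmul1 mul e (map2 S (RC y c)) = map2 S (lmul1 mul e (RC y c)).
  by rewrite /lmul1 /map2 -!map_comp.
rewrite (tmul_map2S_QC (teq_trans (lmul1_RC _ _ _) (teq_sym (lmul2_LC _ _ _)))).
have -> : map2 S (lmul2 mul c (LC y e)) = rmul2 mul (map2 S (LC y e)) (S c).
  by rewrite /lmul2 /map2 /rmul2 -!map_comp; apply: eq_map => p /=; rewrite HSmul.
rewrite tmul_rmul2 (HantC (a := e) (b := y)) //.
by rewrite /lambda_T /= cats0; apply: teq_refl.
Qed.

Lemma tmul_map1S_LB p e : tmul mul (map1 S (LB p e)) = mract (S e) (SC (epsC p)).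
Proof.
have mC := SC_mult (epsC_C p).
apply: nondeg_eql => g.
rewrite -tmul_rmul2 -(mul_mlact mC).
have -> : rmul2 mul (map1 S (LB p e)) g = map1 S (rmul2 mul (LB p e) g).
  by rewrite /rmul2 /map1 -!map_comp.
rewrite (tmul_map1S_QB (teq_trans (rmul2_LB _ _ _) (teq_sym (rmul1_RB _ _ _)))).
have -> : map1 S (rmul1 mul (RB p g) e) = lmul1 mul (S e) (map1 S (RB p g)).
  by rewrite /lmul1 /map1 /rmul1 -!map_comp; apply: eq_map => q /=; rewrite HSmul.
rewrite tmul_lmul1 (HantB (a := p) (b := g)) //.
by rewrite /T_rho /= cats0; apply: teq_refl.
Qed.

Lemma flatten_map_comp (X Y Z : Type) (f : Y -> seq Z) (g : X -> Y) (v : seq X) :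
  flatten (map f (map g v)) = flatten (map (fun x => f (g x)) v).
Proof. by rewrite -map_comp. Qed.
Lemma map_flat (X Y Z : Type) (g : Y -> Z) (f : X -> seq Y) (v : seq X) :
  map g (flatten (map f v)) = flatten (map (fun x => map g (f x)) v).
Proof. by rewrite map_flatten -map_comp. Qed.
Lemma flatten_map_flatten (X Y Z : Type) (f : Y -> seq Z) (g : X -> seq Y) (v : seq X) :
  flatten (map f (flatten (map g v))) = flatten (map (fun x => flatten (map f (g x))) v).
Proof. by elim: v => [|x v IH] //=; rewrite map_cat flatten_cat IH. Qed.
Lemma Trho_map2 f v : T_rho RB (map2 f v) = flatten [seq RB p.1 (f p.2) | p <- v].
Proof. by rewrite /T_rho /map2 -map_comp. Qed.
Lemma Tlambda_map1 f v : T_lambda LB (map1 f v) = flatten [seq LB p.2 (f p.1) | p <- v].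
Proof. by rewrite /T_lambda /map1 -map_comp. Qed.
Lemma lambdaT_map1 f v : lambda_T LC (map1 f v) = flatten [seq LC p.2 (f p.1) | p <- v].
Proof. by rewrite /lambda_T /map1 -map_comp. Qed.
Lemma rhoT_map2 f v : rho_T RC (map2 f v) = flatten [seq RC p.1 (f p.2) | p <- v].
Proof. by rewrite /rho_T /map2 -map_comp. Qed.

(* Contractions of a triple tensor by the antipode; applied to the mixed
   coassociativity laws they produce the terms to which the antipode
   identities apply. *)
Definition mul23S (t : A * A * A) : A * A := (t.1.1, mul t.1.2 (S t.2)).
Definition Smul12 (t : A * A * A) : A * A := (mul (S t.1.1) t.1.2, t.2).
Definition mul21Sinv (t : A * A * A) : A * A := (mul t.1.2 (Sinv t.1.1), t.2).
Definition Sinvmul32 (t : A * A * A) : A * A := (t.1.1, mul (Sinv t.2) t.1.2).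

Lemma mul23S_eqBC3 v w : eqBC3 B C SB SC v w -> eQB (map mul23S v) (map mul23S w).
Proof.
apply: teq3_map => s t.
case => [a a' b c|a b b' c|a b c c'|k a b c|k a b c|b c|a b c a' b' c'
         [x a0 b0 c0 Bx|y a0 b0 c0 Cy]]; rewrite /mul23S /=.
- by apply: tensDl.
- by rewrite mulDl; apply: tensDr.
- by rewrite HSadd mulDr; apply: tensDr.
- by rewrite mulZl; apply: tensZ.
- by rewrite mulZl HSscale mulZr; apply: teq_refl.
- by apply: tens0l.
- by rewrite -(mlactM (SB_mult Bx)); apply: tens_bal; apply: bQB.
- by rewrite S_mractC // (mul_mlact (SC_mult Cy)); apply: teq_refl.
Qed.

Lemma Smul12_eqBC3 v w : eqBC3 B C SB SC v w -> eQC (map Smul12 v) (map Smul12 w).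
Proof.
apply: teq3_map => s t.
case => [a a' b c|a b b' c|a b c c'|k a b c|k a b c|b c|a b c a' b' c'
         [x a0 b0 c0 Bx|y a0 b0 c0 Cy]]; rewrite /Smul12 /=.
- by rewrite HSadd mulDl; apply: tensDl.
- by rewrite mulDr; apply: tensDl.
- by apply: tensDr.
- by rewrite HSscale mulZl mulZr; apply: teq_refl.
- by rewrite mulZr; apply: tensZ.
- by rewrite S0 mul0l; apply: tens0l.
- by rewrite S_mlactB // (mul_mlact (SB_mult Bx)); apply: teq_refl.
- by rewrite -(mractM (SC_mult Cy)); apply: tens_bal; apply: bQC.
Qed.

Lemma mul21Sinv_eqCB3 v w : eqCB3 B C SB SC v w -> eQB (map mul21Sinv v) (map mul21Sinv w).
Proof.
apply: teq3_map => s t.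
case => [a a' b c|a b b' c|a b c c'|k a b c|k a b c|b c|a b c a' b' c'
         [y a0 b0 c0 Cy|x a0 b0 c0 Bx]]; rewrite /mul21Sinv /=.
- by rewrite SinvD mulDr; apply: tensDl.
- by rewrite mulDl; apply: tensDl.
- by apply: tensDr.
- by rewrite SinvZ mulZr mulZl; apply: teq_refl.
- by rewrite mulZl; apply: tensZ.
- by rewrite Sinv0 mul0r; apply: tens0l.
- by rewrite Sinv_mractSC // (mul_mlact (C_mult Cy)); apply: teq_refl.
- by rewrite -(mlactM (B_mult Bx)); apply: tens_bal; apply: bQB.
Qed.

Lemma Sinvmul32_eqCB3 v w : eqCB3 B C SB SC v w -> eQC (map Sinvmul32 v) (map Sinvmul32 w).
Proof.
apply: teq3_map => s t.
case => [a a' b c|a b b' c|a b c c'|k a b c|k a b c|b c|a b c a' b' c'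
         [y a0 b0 c0 Cy|x a0 b0 c0 Bx]]; rewrite /Sinvmul32 /=.
- by apply: tensDl.
- by rewrite mulDr; apply: tensDr.
- by rewrite SinvD mulDl; apply: tensDr.
- by rewrite mulZr; apply: tensZ.
- by rewrite mulZr SinvZ mulZl; apply: teq_refl.
- by apply: tens0l.
- by rewrite -(mractM (C_mult Cy)); apply: tens_bal; apply: bQC.
- by rewrite Sinv_mlactSB // (mul_mlact (B_mult Bx)); apply: teq_refl.
Qed.

Lemma map_ext_l (f : A * A * A -> A * A) F w :
  map f (ext_l F w) = flatten [seq [seq f (u.1, u.2, p.2) | u <- F p.1] | p <- w].
Proof. by rewrite /ext_l map_flat; congr flatten; apply: eq_map => p; rewrite -map_comp. Qed.
Lemma map_ext_r (f : A * A * A -> A * A) F w :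
  map f (ext_r F w) = flatten [seq [seq f (p.1, u.1, u.2) | u <- F p.2] | p <- w].
Proof. by rewrite /ext_r map_flat; congr flatten; apply: eq_map => p; rewrite -map_comp. Qed.

Lemma Trho_S_rhoT b c : eQB (T_rho RB (map2 S (RC b c))) [:: (b, S c)].
Proof.
apply: eqQB_by_rmul1 => d.
apply: (@teq_trans _ _ _ (map mul23S (ext_l (fun p => LB p d) (RC b c)))).
  rewrite Trho_map2 map_ext_l /rmul1 map_flat; apply: teq_flatten => p /=.
  by apply: (teq_trans (rmul1_RB _ _ _)); apply: teq_sym; exact: (rmul2_LB p.1 (S p.2) d).
apply: (teq_trans (mul23S_eqBC3 (HcoBC d b c))).
rewrite map_ext_r.
apply: (@teq_trans _ _ _ (flatten [seq [:: (p.1, tmul mul (map2 S (RC p.2 c)))] | p <- LB b d])).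
  by apply: teq_flatten => p; rewrite /tmul /map2 big_map; apply: tens_sumr.
apply: (@teq_trans _ _ _ (flatten [seq [:: (mlact (epsB p.2) p.1, S c)] | p <- LB b d])).
  apply: teq_flatten => p; rewrite tmul_map2S_RC.
  by apply: teq_sym; apply: tens_bal; apply: bQB; apply: epsB_B.
rewrite flatten_map1; apply: (teq_trans (tens_suml _ _ _ _)).
case: HepsB => _ _ _ _ counit_Tlambda; rewrite (counit_Tlambda d b (LB b d)); first exact: teq_refl.
by rewrite /T_lambda /= cats0; apply: teq_refl.
Qed.

Lemma Trho_S_lambdaT a b : eQB (T_rho RB (map2 S (LC b a))) (LB a b).
Proof.
apply: eqQB_by_rmul2 => z; rewrite -(HKS z); set c := Sinv z.
have step1 : eQB (rmul2 mul (T_rho RB (map2 S (LC b a))) (S c))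
                 (T_rho RB (map2 S (lmul2 mul c (LC b a)))).
  rewrite !Trho_map2 /lmul2 flatten_map_comp /rmul2 map_flat.
  by apply: teq_flatten => p /=; rewrite HSmul; apply: teq_sym; apply: RB_mulr.
have step2 : eQB (T_rho RB (map2 S (lmul2 mul c (LC b a))))
                 (T_rho RB (map2 S (lmul1 mul a (RC b c)))).
  case: HbTr => Trho_resp _ _; apply: Trho_resp; apply: map2S_QC_PB.
  by apply: (teq_trans (lmul2_LC _ _ _)); apply: teq_sym; apply: lmul1_RC.
have step3 : eQB (T_rho RB (map2 S (lmul1 mul a (RC b c))))
                 (DB a (T_rho RB (map2 S (RC b c)))).
  rewrite !Trho_map2 /lmul1 flatten_map_comp.
  apply: teq_sym; apply: (teq_trans (DB_flat _ _ _)); apply: teq_flatten => p /=.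
  by apply: teq_sym; apply: RB_mull.
apply: (teq_trans step1 (teq_trans step2 (teq_trans step3 _))).
apply: (teq_trans (DB_resp _ (Trho_S_rhoT b c))).
by apply: teq_sym; apply: rmul2_LB.
Qed.

Lemma Tlambda_Sinv_lambdaT a b : eQB (T_lambda LB (map1 Sinv (LC b a))) [:: (Sinv a, b)].
Proof.
apply: eqQB_by_rmul2 => c.
rewrite Tlambda_map1 /rmul2 map_flat.
apply: (@teq_trans _ _ _ (map mul21Sinv (ext_r (fun q => RB q c) (LC b a)))).
  rewrite map_ext_r; apply: teq_flatten => p /=.
  by apply: (teq_trans (rmul2_LB _ _ _)); apply: teq_sym; exact: (rmul1_RB p.2 c (Sinv p.1)).
apply: (teq_trans (mul21Sinv_eqCB3 (teq_sym (HcoCB a b c)))).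
rewrite map_ext_l.
apply: (@teq_trans _ _ _ (flatten [seq [:: (Sinv (tmul mul (map2 S (LC p.1 a))), p.2)] | p <- RB b c])).
  apply: teq_flatten => p.
  have -> : Sinv (tmul mul (map2 S (LC p.1 a))) = \sum_(u <- LC p.1 a) mul u.2 (Sinv u.1).
    by rewrite /tmul /map2 big_map Sinv_sum; apply: eq_bigr => u _ /=; rewrite SinvM HSK.
  exact: tens_suml.
apply: (@teq_trans _ _ _ (flatten [seq [:: (Sinv a, mlact (SB (epsB p.1)) p.2)] | p <- RB b c])).
  apply: teq_flatten => p.
  rewrite (HantC (a := a) (b := p.1)); last by rewrite /lambda_T /= cats0; apply: teq_refl.
  by rewrite Sinv_mractSB; [apply: tens_bal; apply: bQB|]; apply: epsB_B.
rewrite flatten_map1; apply: (teq_trans (tens_sumr _ _ _ _)).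
case: HepsB => _ _ _ counit_Trho _; rewrite (counit_Trho b c (RB b c)); first exact: teq_refl.
by rewrite /T_rho /= cats0; apply: teq_refl.
Qed.

Lemma Tlambda_Sinv_rhoT c d : eQB (T_lambda LB (map1 Sinv (RC d c))) (RB c d).
Proof.
apply: eqQB_by_rmul1 => z; rewrite -(HSK z); set e := S z.
apply: (@teq_trans _ _ _ (T_lambda LB (map1 Sinv (lmul1 mul e (RC d c))))).
  rewrite !Tlambda_map1 /lmul1 flatten_map_comp /rmul1 map_flat.
  by apply: teq_flatten => p /=; rewrite SinvM; apply: teq_sym; apply: LB_mulr.
apply: (@teq_trans _ _ _ (T_lambda LB (map1 Sinv (lmul2 mul c (LC d e))))).
  case: HbTl => Tlambda_resp _ _; apply: Tlambda_resp; apply: map1Sinv_QC_LC.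
  by apply: (teq_trans (lmul1_RC _ _ _)); apply: teq_sym; apply: lmul2_LC.
apply: (@teq_trans _ _ _ (DB c (T_lambda LB (map1 Sinv (LC d e))))).
  rewrite !Tlambda_map1 /lmul2 flatten_map_comp.
  apply: teq_sym; apply: (teq_trans (DB_flat _ _ _)); apply: teq_flatten => p /=.
  by apply: teq_sym; apply: LB_mull.
apply: (teq_trans (DB_resp _ (Tlambda_Sinv_lambdaT _ _))).
by apply: teq_sym; apply: rmul1_RB.
Qed.

Lemma lambdaT_S_Tlambda a e : eQC (lambda_T LC (map1 S (LB a e))) [:: (S e, a)].
Proof.
apply: eqQC_by_lmul2 => f.
rewrite lambdaT_map1 /lmul2 map_flat.
apply: (@teq_trans _ _ _ (map Smul12 (ext_r (fun q => RC q f) (LB a e)))).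
  rewrite map_ext_r; apply: teq_flatten => p /=.
  by apply: (teq_trans (lmul2_LC _ _ _)); apply: teq_sym; exact: (lmul1_RC p.2 (S p.1) f).
apply: (teq_trans (Smul12_eqBC3 (teq_sym (HcoBC e a f)))).
rewrite map_ext_l.
apply: (@teq_trans _ _ _ (flatten [seq [:: (tmul mul (map1 S (LB p.1 e)), p.2)] | p <- RC a f])).
  by apply: teq_flatten => p; rewrite /tmul /map1 big_map; apply: tens_suml.
apply: (@teq_trans _ _ _ (flatten [seq [:: (S e, mract p.2 (epsC p.1))] | p <- RC a f])).
  apply: teq_flatten => p; rewrite tmul_map1S_LB.
  by apply: tens_bal; apply: bQC; apply: epsC_C.
rewrite flatten_map1; apply: (teq_trans (tens_sumr _ _ _ _)).
case: HepsC => _ _ _ counit_rhoT _; rewrite (counit_rhoT a f (RC a f)); first exact: teq_refl.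
by rewrite /rho_T /= cats0; apply: teq_refl.
Qed.

Lemma lambdaT_S_Trho a b : eQC (lambda_T LC (map1 S (RB a b))) (RC b a).
Proof.
apply: eqQC_by_lmul1 => e0; rewrite -(HKS e0); set e := Sinv e0.
apply: (@teq_trans _ _ _ (lambda_T LC (map1 S (rmul1 mul (RB a b) e)))).
  rewrite !lambdaT_map1 /rmul1 flatten_map_comp /lmul1 map_flat.
  by apply: teq_flatten => p /=; rewrite HSmul; apply: teq_sym; apply: LC_mulr.
apply: (@teq_trans _ _ _ (lambda_T LC (map1 S (rmul2 mul (LB a e) b)))).
  case: HblT => lambdaT_resp _ _; apply: lambdaT_resp; apply: map1S_QB_PC.
  by apply: (teq_trans (rmul1_RB _ _ _)); apply: teq_sym; apply: rmul2_LB.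
apply: (@teq_trans _ _ _ (DC b (lambda_T LC (map1 S (LB a e))))).
  rewrite !lambdaT_map1 /rmul2 flatten_map_comp.
  apply: teq_sym; apply: (teq_trans (DC_flat _ _ _)); apply: teq_flatten => p /=.
  by apply: teq_sym; apply: LC_mull.
apply: (teq_trans (DC_resp _ (lambdaT_S_Tlambda a e))).
by apply: teq_sym; apply: lmul1_RC.
Qed.

Lemma rhoT_Sinv_Trho c g : eQC (rho_T RC (map2 Sinv (RB c g))) [:: (c, Sinv g)].
Proof.
apply: eqQC_by_lmul1 => e.
rewrite rhoT_map2 /lmul1 map_flat.
apply: (@teq_trans _ _ _ (map Sinvmul32 (ext_l (fun p => LC p e) (RB c g)))).
  rewrite map_ext_l; apply: teq_flatten => p /=.
  by apply: (teq_trans (lmul1_RC _ _ _)); apply: teq_sym; exact: (lmul2_LC p.1 e (Sinv p.2)).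
apply: (teq_trans (Sinvmul32_eqCB3 (HcoCB e c g))).
rewrite map_ext_r.
apply: (@teq_trans _ _ _ (flatten [seq [:: (p.1, Sinv (tmul mul (map1 S (RB p.2 g))))] | p <- LC c e])).
  apply: teq_flatten => p.
  have -> : Sinv (tmul mul (map1 S (RB p.2 g))) = \sum_(u <- RB p.2 g) mul (Sinv u.2) u.1.
    by rewrite /tmul /map1 big_map Sinv_sum; apply: eq_bigr => u _ /=; rewrite SinvM HSK.
  exact: tens_sumr.
apply: (@teq_trans _ _ _ (flatten [seq [:: (mract p.1 (SC (epsC p.2)), Sinv g)] | p <- LC c e])).
  apply: teq_flatten => p.
  rewrite (HantB (a := p.2) (b := g)); last by rewrite /T_rho /= cats0; apply: teq_refl.
  by rewrite Sinv_mlactSC; [apply: teq_sym; apply: tens_bal; apply: bQC|]; apply: epsC_C.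
rewrite flatten_map1; apply: (teq_trans (tens_suml _ _ _ _)).
case: HepsC => _ _ _ _ counit_lambdaT; rewrite (counit_lambdaT e c (LC c e)); first exact: teq_refl.
by rewrite /lambda_T /= cats0; apply: teq_refl.
Qed.

Lemma rhoT_Sinv_Tlambda c d : eQC (rho_T RC (map2 Sinv (LB c d))) (LC d c).
Proof.
apply: eqQC_by_lmul2 => z; rewrite -(HSK z); set g := S z.
apply: (@teq_trans _ _ _ (rho_T RC (map2 Sinv (rmul2 mul (LB c d) g)))).
  rewrite !rhoT_map2 /rmul2 flatten_map_comp /lmul2 map_flat.
  by apply: teq_flatten => p /=; rewrite SinvM; apply: teq_sym; apply: RC_mulr.
apply: (@teq_trans _ _ _ (rho_T RC (map2 Sinv (rmul1 mul (RB c g) d)))).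
  case: HbrT => rhoT_resp _ _; apply: rhoT_resp; apply: map2Sinv_QB_LB.
  by apply: (teq_trans (rmul2_LB _ _ _)); apply: teq_sym; apply: rmul1_RB.
apply: (@teq_trans _ _ _ (DC d (rho_T RC (map2 Sinv (RB c g))))).
  rewrite !rhoT_map2 /rmul1 flatten_map_comp.
  apply: teq_sym; apply: (teq_trans (DC_flat _ _ _)); apply: teq_flatten => p /=.
  by apply: teq_sym; apply: RC_mull.
apply: (teq_trans (DC_resp _ (rhoT_Sinv_Trho _ _))).
by apply: teq_sym; apply: lmul2_LC.
Qed.

Lemma Trho_map2S_lambdaT w :
  eQB (T_rho RB (map2 S (lambda_T LC w))) (T_lambda LB (flip w)).
Proof.
have -> : T_rho RB (map2 S (lambda_T LC w)) =
          flatten [seq T_rho RB (map2 S (LC p.2 p.1)) | p <- w].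
  by rewrite /lambda_T /map2 /T_rho map_flat flatten_map_flatten.
have -> : T_lambda LB (flip w) = flatten [seq LB p.1 p.2 | p <- w].
  by rewrite /T_lambda /flip flatten_map_comp.
by apply: teq_flatten => p; apply: Trho_S_lambdaT.
Qed.

Lemma Tlambda_map1Sinv_rhoT w :
  eQB (T_lambda LB (map1 Sinv (rho_T RC (flip w)))) (T_rho RB w).
Proof.
rewrite /rho_T /flip flatten_map_comp /map1 map_flat /T_lambda flatten_map_flatten /T_rho.
by apply: teq_flatten => p /=; apply: Tlambda_Sinv_rhoT.
Qed.

Lemma lambdaT_map1S_Trho w :
  eQC (lambda_T LC (map1 S (T_rho RB w))) (rho_T RC (flip w)).
Proof.
have -> : lambda_T LC (map1 S (T_rho RB w)) =
          flatten [seq lambda_T LC (map1 S (RB p.1 p.2)) | p <- w].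
  by rewrite /T_rho /map1 /lambda_T map_flat flatten_map_flatten.
have -> : rho_T RC (flip w) = flatten [seq RC p.2 p.1 | p <- w].
  by rewrite /rho_T /flip flatten_map_comp.
by apply: teq_flatten => p; apply: lambdaT_S_Trho.
Qed.

Lemma rhoT_map2Sinv_Tlambda w :
  eQC (rho_T RC (map2 Sinv (T_lambda LB (flip w)))) (lambda_T LC w).
Proof.
rewrite /T_lambda /flip flatten_map_comp /map2 map_flat /rho_T flatten_map_flatten /lambda_T.
by apply: teq_flatten => p /=; apply: rhoT_Sinv_Tlambda.
Qed.

Lemma map1_SK v : map1 S (map1 Sinv v) = v.
Proof. by rewrite /map1 -map_comp; elim: v => [|[a b] v IH] //=; rewrite HKS IH. Qed.
Lemma map2_SK v : map2 S (map2 Sinv v) = v.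
Proof. by rewrite /map2 -map_comp; elim: v => [|[a b] v IH] //=; rewrite HKS IH. Qed.

Lemma S_flip_lambdaT (Trho_inv : T2 A -> T2 A) :
  tinverse ePB eQB (T_rho RB) Trho_inv -> forall w,
  eLB (map1 S (flip (lambda_T LC w))) (flip (Trho_inv (T_lambda LB (flip w)))).
Proof.
move=> [_ Trho_invK _] w.
have -> : map1 S (flip (lambda_T LC w)) = flip (map2 S (lambda_T LC w)).
  by rewrite /map1 /flip /map2 -!map_comp.
apply: flip_PB_LB; case: HbTr => _ Trho_inj _; apply: Trho_inj.
exact: (teq_trans (Trho_map2S_lambdaT w) (teq_sym (Trho_invK _))).
Qed.

Lemma flip_Trho_inv_rhoT_inv (Trho_inv rhoT_inv : T2 A -> T2 A) :
  tinverse ePB eQB (T_rho RB) Trho_inv ->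
  tinverse eLB eQC (rho_T RC) rhoT_inv -> forall w,
  eLB (flip (Trho_inv (T_lambda LB (flip w)))) (rhoT_inv (map1 S (flip w))).
Proof.
move=> [_ Trho_invK _] [_ rhoT_invK _] w.
set v := Trho_inv _.
case: HbrT => _ rhoT_inj _; apply: rhoT_inj; apply: (teq_trans _ (teq_sym (rhoT_invK _))).
have Sinv_rhoT_v : eLC (map1 Sinv (rho_T RC (flip v))) (flip w).
  case: HbTl => _ Tlambda_inj _; apply: Tlambda_inj.
  exact: (teq_trans (Tlambda_map1Sinv_rhoT v) (Trho_invK _)).
by have := map1S_LC_QC Sinv_rhoT_v; rewrite map1_SK.
Qed.

Lemma S_flip_Trho (lambdaT_inv : T2 A -> T2 A) :
  tinverse ePC eQC (lambda_T LC) lambdaT_inv -> forall w,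
  eLC (map2 S (flip (T_rho RB w))) (flip (lambdaT_inv (rho_T RC (flip w)))).
Proof.
move=> [_ lambdaT_invK _] w.
have -> : map2 S (flip (T_rho RB w)) = flip (map1 S (T_rho RB w)).
  by rewrite /map1 /flip /map2 -!map_comp.
apply: flip_PC_LC; case: HblT => _ lambdaT_inj _; apply: lambdaT_inj.
exact: (teq_trans (lambdaT_map1S_Trho w) (teq_sym (lambdaT_invK _))).
Qed.

Lemma flip_lambdaT_inv_Tlambda_inv (Tlambda_inv lambdaT_inv : T2 A -> T2 A) :
  tinverse eLC eQB (T_lambda LB) Tlambda_inv ->
  tinverse ePC eQC (lambda_T LC) lambdaT_inv -> forall w,
  eLC (flip (lambdaT_inv (rho_T RC (flip w)))) (Tlambda_inv (map2 S (flip w))).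
Proof.
move=> [_ Tlambda_invK _] [_ lambdaT_invK _] w.
set v := lambdaT_inv _.
case: HbTl => _ Tlambda_inj _; apply: Tlambda_inj.
apply: (teq_trans _ (teq_sym (Tlambda_invK _))).
have Sinv_Tlambda_v : eLB (map2 Sinv (T_lambda LB (flip v))) (flip w).
  case: HbrT => _ rhoT_inj _; apply: rhoT_inj.
  exact: (teq_trans (rhoT_map2Sinv_Tlambda v) (lambdaT_invK _)).
by have := map2S_LB_QB Sinv_Tlambda_v; rewrite map2_SK.
Qed.

End RegularMHA.

Theorem proposition5p8 (R : realType) (A : lmodType R[i]) (mul : A -> A -> A)
  (B C : mult A -> Prop) (SB SC : mult A -> mult A)
  (DB DC : A -> T2 A -> T2 A) (LB RB LC RC : A -> A -> T2 A)
  (S : A -> A)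
  (Tlambda_inv Trho_inv lambdaT_inv rhoT_inv : T2 A -> T2 A) :
  is_regular_mha mul B C SB SC DB DC LB RB LC RC ->
  is_antipode mul B C SB SC LB RB LC RC S ->
  tinverse (eqLC C) (eqQB B SB) (T_lambda LB) Tlambda_inv ->
  tinverse (eqPB B) (eqQB B SB) (T_rho RB) Trho_inv ->
  tinverse (eqPC C) (eqQC C SC) (lambda_T LC) lambdaT_inv ->
  tinverse (eqLB B) (eqQC C SC) (rho_T RC) rhoT_inv ->
  (* (i) *)
  (forall w : T2 A,
     eqLB B (map1 S (flip (lambda_T LC w)))
                    (flip (Trho_inv (T_lambda LB (flip w)))) /\
     eqLB B (flip (Trho_inv (T_lambda LB (flip w))))
                    (rhoT_inv (map1 S (flip w)))) /\
  (* (ii) *)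
  (forall w : T2 A,
     eqLC C (map2 S (flip (T_rho RB w)))
                    (flip (lambdaT_inv (rho_T RC (flip w)))) /\
     eqLC C (flip (lambdaT_inv (rho_T RC (flip w))))
                    (Tlambda_inv (map2 S (flip w)))).
Proof.
move=> [Hbialg [HbTl HbTr HblT HbrT] _] Hant HTl HTr HlT HrT.
case: Hbialg => [[[Halg Hnd _] [HsubB HsubC HantiB HantiC]
                  [HlspanB HlspanSB HrspanC HrspanSC] [HndQB1 HndQB2 HndQC1 HndQC2]]
                 [[HDBlin HDBLR _ _ HDBmul] [HDClin HDCLR _ _ HDCmul]] _ [_ _ HcoBC HcoCB]].
case: Hant => [[HSadd HSscale] [Sinv HSK HKS] HSmul HSform
               [epsB [epsC [HepsB HepsC HantB HantC]]]].
split=> w; split.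
- by eapply (@S_flip_lambdaT R A mul B C SB SC DB DC LB RB LC RC S Sinv epsB); eassumption.
- by eapply (@flip_Trho_inv_rhoT_inv R A mul B C SB SC DB DC LB RB LC RC S Sinv epsB); eassumption.
- by eapply (@S_flip_Trho R A mul B C SB SC DB DC LB RB LC RC S Sinv epsC); eassumption.
- by eapply (@flip_lambdaT_inv_Tlambda_inv R A mul B C SB SC DB DC LB RB LC RC S Sinv epsC); eassumption.
Qed.
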